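(* Let $N\in\mathbb{N}$ and let $\mathbf{Y}$ be an $N$-sgrm over $\mathbb{R}^d$ on $[0,T]$. Then there exists exactly one sgrm $\mathbf{X}$ which is an extension of $\mathbf{Y}$ and is minimal in the sense that $\dot{\mathbf{X}}_{s,s}\in\mathcal{L}^N(\mathbb{R}^d)\subset\mathcal{L}((\mathbb{R}^d))$ for all $s\in[0,T]$. This $\mathbf{X}$ satisfies $\dot{\mathbf{X}}_{s,s}=\dot{\mathbf{Y}}_{s,s}$ for all $s$. Moreover, for every interval $[s,t]\subset[0,T]$, $\mathbf{X}_{s,t}$ depends only on $\{\mathbf{Y}|_{[u,v]}: s\le u\le v\le t\}$.
   Context: Fix $T>0$, $d\ge1$. $T((\mathbb{R}^d))$ is the algebra of formal tensor series $\mathbf{x}=\sum_w\mathbf{x}^we_w$ over words $w$ in letters $\{1,\dots,d\}$ (including the empty word $\mathbf{1}$) with concatenation product $\otimes$; $\langle\mathbf{x},w\rangle:=\mathbf{x}^w$. $T^N(\mathbb{R}^d)$ is the span of words of length $\le N$, viewed as the quotient of $T((\mathbb{R}^d))$ by series supported on words of length $>N$, with induced product $\otimes_N$ and projection $\mathrm{proj}_N$. Shuffle product: bilinear, $\mathbf{1}$ is the unit, $wi\sqcup\!\sqcup vj=(w\sqcup\!\sqcup vj)i+(wi\sqcup\!\sqcup v)j$. $\mathcal{L}(\mathbb{R}^d)$: Lie polynomials (Lie algebra generated by $e_1,\dots,e_d$ under the commutator of $\otimes$); $\mathcal{L}^N(\mathbb{R}^d)=\mathrm{proj}_N\mathcal{L}(\mathbb{R}^d)$,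 viewed inside $T((\mathbb{R}^d))$ as polynomials of degree $\le N$; $\mathcal{L}((\mathbb{R}^d))$: Lie series. An $N$-sgrm is a non-zero map $\mathbf{X}:[0,T]^2\to T^N(\mathbb{R}^d)$ with (i) $\langle\mathbf{X}_{s,t},v\sqcup\!\sqcup w\rangle=\langle\mathbf{X}_{s,t},v\rangle\langle\mathbf{X}_{s,t},w\rangle$ for all $s,t$ and words with $|v|+|w|\le N$; (ii) $\mathbf{X}_{s,u}\otimes_N\mathbf{X}_{u,t}=\mathbf{X}_{s,t}$; (iii) $t\mapsto\langle\mathbf{X}_{s,t},w\rangle$ smooth for each $|w|\le N$ and each $s$. An sgrm is a non-zero map $[0,T]^2\to T((\mathbb{R}^d))$ satisfying (i)–(iii) for all words, with $\otimes$. The diagonal derivative is $\dot{\mathbf{X}}_{s,s}:=\partial_t|_{t=s}\mathbf{X}_{s,t}$ (coordinatewise). An sgrm $\mathbf{X}$ is an extension of an $N$-sgrm $\mathbf{Y}$ if $\langle\mathbf{X}_{s,t},w\rangle=\langle\mathbf{Y}_{s,t},w\rangle$ for all $s,t$ and all words with $|w|\le N$. *)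

From Stdlib Require Import Reals List Arith Lra.
From Coquelicot Require Import Coquelicot.
Import ListNotations.
Open Scope R_scope.

Definition word := list nat.
Definition valid (d : nat) (w : word) : Prop :=
  List.Forall (fun i : nat => (1 <= i)%nat /\ (i <= d)%nat) w.

(* Tensor series: coefficient maps  w |-> <x, w>. *)
Definition series := word -> R.

Definition conc (x y : series) : series :=
  fun w => sum_f_R0 (fun k => x (firstn k w) * y (skipn k w)) (length w).

(* Shuffle product of words, as the list (multiset) of words it sums.
   shr works on reversed words so that the recursion
   wi ⧢ vj = (w ⧢ vj) i + (wi ⧢ v) j  is followed literally. *)
Fixpoint shr (u v : word) : list word :=
  match u with
  | [] => [v]
  | a :: u' =>
      (fix aux (v : word) : list word :=
         match v with
         | [] => [u]
         | b :: v' => map (cons a) (shr u' v) ++ map (cons b) (aux v')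
         end) v
  end.

Definition shuffle (v w : word) : list word :=
  map (@rev nat) (shr (rev v) (rev w)).

Definition pair_list (x : series) (l : list word) : R :=
  fold_right (fun w acc => x w + acc) 0 l.

Definition e_letter (i : nat) : series :=
  fun w => match w with [j] => if Nat.eqb i j then 1 else 0 | _ => 0 end.

Inductive is_lie (d : nat) : series -> Prop :=
| lie_gen : forall i : nat, (1 <= i)%nat -> (i <= d)%nat -> is_lie d (e_letter i)
| lie_zero : is_lie d (fun _ => 0)
| lie_add : forall x y, is_lie d x -> is_lie d y -> is_lie d (fun w => x w + y w)
| lie_scal : forall c x, is_lie d x -> is_lie d (fun w => c * x w)
| lie_bracket : forall x y, is_lie d x -> is_lie d y ->
    is_lie d (fun w => conc x y w - conc y x w)
| lie_ext : forall x y, (forall w, x w = y w) -> is_lie d x -> is_lie d y.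

Definition lie_trunc (d N : nat) (x : series) : Prop :=
  exists y, is_lie d y /\
    forall w, x w = if Nat.leb (length w) N then y w else 0.

Definition has_deriv_within (a b : R) (f : R -> R) (x l : R) : Prop :=
  filterlim (fun y => (f y - f x) / (y - x))
    (within (fun y => a <= y <= b /\ y <> x) (locally x)) (locally l).

Definition smooth_on (a b : R) (f : R -> R) : Prop :=
  exists F : nat -> R -> R,
    (forall x, a <= x <= b -> F O x = f x) /\
    (forall n x, a <= x <= b -> has_deriv_within a b (F n) x (F (S n) x)).

Definition in_I (T s : R) : Prop := 0 <= s <= T.

Definition gpath := R -> R -> series.

(* N-sgrm (all conditions restricted to words of length <= N, i.e. in T^N). *)
Definition N_sgrm (d : nat) (T : R) (N : nat) (Y : gpath) : Prop :=
  (exists s t w, in_I T s /\ in_I T t /\ valid d w /\ (length w <= N)%nat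
     /\ Y s t w <> 0) /\
  (forall s t v w, in_I T s -> in_I T t -> valid d v -> valid d w ->
     (length v + length w <= N)%nat ->
     pair_list (Y s t) (shuffle v w) = Y s t v * Y s t w) /\
  (forall s u t w, in_I T s -> in_I T u -> in_I T t -> valid d w ->
     (length w <= N)%nat -> conc (Y s u) (Y u t) w = Y s t w) /\
  (forall s w, in_I T s -> valid d w -> (length w <= N)%nat ->
     smooth_on 0 T (fun t => Y s t w)).

Definition sgrm (d : nat) (T : R) (X : gpath) : Prop :=
  (exists s t w, in_I T s /\ in_I T t /\ valid d w /\ X s t w <> 0) /\
  (forall s t v w, in_I T s -> in_I T t -> valid d v -> valid d w ->
     pair_list (X s t) (shuffle v w) = X s t v * X s t w) /\
  (forall s u t w, in_I T s -> in_I T u -> in_I T t -> valid d w ->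
     conc (X s u) (X u t) w = X s t w) /\
  (forall s w, in_I T s -> valid d w -> smooth_on 0 T (fun t => X s t w)).

Definition extends (d : nat) (T : R) (N : nat) (X Y : gpath) : Prop :=
  forall s t w, in_I T s -> in_I T t -> valid d w -> (length w <= N)%nat ->
    X s t w = Y s t w.

Definition minimal (d : nat) (T : R) (N : nat) (X : gpath) : Prop :=
  forall s, in_I T s ->
    exists l, lie_trunc d N l /\
      forall w, valid d w -> has_deriv_within 0 T (fun t => X s t w) s (l w).

(* The diagonal derivative L_u := d/dt Y_{u,t} at t = u is, in degrees <= N,
   primitive for the shuffle coproduct, hence a Lie polynomial by Friedrichs'
   criterion. The minimal extension X solves the linear equation
   d/dt X_{s,t} = X_{s,t} (x) L_t, X_{s,s} = 1, which is solved degree by degree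
   by integration. Uniqueness for this equation yields Chen's identity and the
   agreement with Y up to degree N, and primitivity of L makes
   <X_{s,t}, a ⧢ b> - <X_{s,t}, a><X_{s,t}, b> constant in t, which yields the
   shuffle identity. Conversely, by Chen's identity every sgrm X' satisfies
   d/dt X'_{s,t} = X'_{s,t} (x) l_t, where l_t is its diagonal derivative; when
   l_t lies in L^N it vanishes above degree N and agrees with L_t below, so X'
   solves the same equation, which involves Y only near the diagonal of
   [s,t]^2. This gives uniqueness and locality. *)

From Stdlib Require Import Reals List Arith.
From Coquelicot Require Import Coquelicot.
Open Scope R_scope.
From Stdlib Require Import Lia Lra Morphisms Setoid Classical ClassicalEpsilon.
Import ListNotations.

Fixpoint lsum {A : Type} (f : A -> R) (l : list A) : R :=
  match l with [] => 0 | x :: l' => f x + lsum f l' end.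

Lemma pair_list_lsum (p : series) l : pair_list p l = lsum p l.
Proof. induction l; simpl; auto. rewrite IHl; auto. Qed.

Lemma lsum_app {A} (f : A -> R) l1 l2 : lsum f (l1 ++ l2) = lsum f l1 + lsum f l2.
Proof. induction l1; simpl; [lra|]. rewrite IHl1; lra. Qed.

Lemma lsum_map {A B} (f : B -> R) (g : A -> B) l : lsum f (map g l) = lsum (fun x => f (g x)) l.
Proof. induction l; simpl; auto. rewrite IHl; auto. Qed.

Lemma lsum_ext {A} (f g : A -> R) l : (forall x, In x l -> f x = g x) -> lsum f l = lsum g l.
Proof. induction l; simpl; intros H; auto. rewrite H, IHl; auto. Qed.

#[global] Instance lsum_proper {A} : Proper (pointwise_relation A eq ==> eq ==> eq) (@lsum A).
Proof. intros f g H l l' <-. apply lsum_ext. intros; apply H. Qed.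

Lemma lsum_plus {A} (f g : A -> R) l : lsum (fun x => f x + g x) l = lsum f l + lsum g l.
Proof. induction l; simpl; [lra|]. rewrite IHl; lra. Qed.

Lemma lsum_minus {A} (f g : A -> R) l : lsum (fun x => f x - g x) l = lsum f l - lsum g l.
Proof. induction l; simpl; [lra|]. rewrite IHl; lra. Qed.

Lemma lsum_scal {A} (c : R) (f : A -> R) l : lsum (fun x => c * f x) l = c * lsum f l.
Proof. induction l; simpl; [lra|]. rewrite IHl; lra. Qed.

Lemma lsum_scal_r {A} (c : R) (f : A -> R) l : lsum (fun x => f x * c) l = lsum f l * c.
Proof. induction l; simpl; [lra|]. rewrite IHl; lra. Qed.

Lemma lsum_zero {A} (f : A -> R) l : (forall x, In x l -> f x = 0) -> lsum f l = 0.
Proof. induction l; simpl; intros H; auto. rewrite H, IHl; auto. lra. Qed.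

Lemma sum_f_R0_lsum f n : sum_f_R0 f n = lsum f (seq 0 (S n)).
Proof.
  induction n; [simpl; lra|]. cbn [sum_f_R0]. rewrite IHn, (seq_S (S n)), lsum_app.
  simpl. lra.
Qed.

Lemma lsum_seq_delta (F : nat -> R) j s len : (s <= j < s + len)%nat ->
  lsum (fun a => (if Nat.eqb a j then 1 else 0) * F a) (seq s len) = F j.
Proof.
  revert s. induction len as [|len IH]; intros s Hj; [lia|].
  simpl. destruct (Nat.eqb s j) eqn:E.
  - apply Nat.eqb_eq in E; subst. rewrite lsum_zero. ring.
    intros a Ha. apply in_seq in Ha. destruct (Nat.eqb a j) eqn:E2; [apply Nat.eqb_eq in E2; lia|ring].
  - apply Nat.eqb_neq in E. rewrite IH by lia. ring.
Qed.

Lemma snoc_case (u : word) : u = [] \/ exists u' i, u = u' ++ [i].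
Proof.
  destruct (rev u) as [|i ru] eqn:E.
  - left. rewrite <- (rev_involutive u), E. reflexivity.
  - right. exists (rev ru), i. rewrite <- (rev_involutive u), E. reflexivity.
Qed.

Fixpoint splits (w : word) : list (word * word) :=
  match w with
  | [] => [([], [])]
  | a :: w' => ([], w) :: map (fun pq : word * word => ((a :: fst pq, snd pq) : word * word)) (splits w')
  end.

Lemma splits_firstn_skipn w :
  splits w = map (fun k => (firstn k w, skipn k w)) (seq 0 (S (length w))).
Proof.
  induction w as [|a w IH]; [reflexivity|].
  cbn [splits length]. rewrite IH, map_map.
  change (seq 0 (S (S (length w)))) with (0%nat :: seq 1 (S (length w))).
  rewrite <- (seq_shift (S (length w)) 0). cbn [map]. rewrite map_map. reflexivity.
Qed.

Lemma conc_splits A B w : conc A B w = lsum (fun pq => A (fst pq) * B (snd pq)) (splits w).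
Proof. unfold conc. rewrite splits_firstn_skipn, sum_f_R0_lsum, lsum_map. reflexivity. Qed.

Lemma splits_snoc w a : splits (w ++ [a]) =
  map (fun pq : word * word => ((fst pq, snd pq ++ [a]) : word * word)) (splits w) ++ [(w ++ [a], [])].
Proof.
  induction w as [|b w IH]; [reflexivity|].
  cbn [app splits]. rewrite IH, map_app, !map_map. simpl. rewrite map_map. reflexivity.
Qed.

Lemma splits_app w p q : In (p, q) (splits w) -> w = p ++ q.
Proof.
  rewrite splits_firstn_skipn, in_map_iff. intros [k [E _]]. inversion E. symmetry. apply firstn_skipn.
Qed.

Lemma splits_valid d w p q : In (p, q) (splits w) -> valid d w ->
  valid d p /\ valid d q /\ (length p + length q = length w)%nat.
Proof.
  intros Hin Vw. apply splits_app in Hin. subst. apply Forall_app in Vw. rewrite length_app. tauto.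
Qed.

Lemma lsum_splits_nil (F : word * word -> R) : lsum F (splits []) = F ([], []).
Proof. cbn [splits lsum]. apply Rplus_0_r. Qed.

Lemma lsum_splits_cons (F : word * word -> R) a w :
  lsum F (splits (a :: w)) = F ([], a :: w) + lsum (fun pq : word * word => F (a :: fst pq, snd pq)) (splits w).
Proof. cbn [splits lsum]. rewrite lsum_map. reflexivity. Qed.

Lemma lsum_splits_snoc (F : word * word -> R) w a :
  lsum F (splits (w ++ [a])) =
  lsum (fun pq : word * word => F (fst pq, snd pq ++ [a])) (splits w) + F (w ++ [a], []).
Proof. rewrite splits_snoc, lsum_app, lsum_map. cbn [lsum]. rewrite Rplus_0_r. reflexivity. Qed.

Lemma lsum_splits_last (F : word -> R) w :
  lsum (fun pq : word * word => match snd pq with [] => F (fst pq) | _ => 0 end) (splits w) = F w.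
Proof.
  destruct (snoc_case w) as [->|[w' [c ->]]].
  - rewrite lsum_splits_nil. reflexivity.
  - rewrite lsum_splits_snoc. cbn [fst snd]. rewrite lsum_zero. ring.
    intros [p q] _. cbn [snd]. destruct q; reflexivity.
Qed.

Definition e_nil : series := fun w => match w with [] => 1 | _ => 0 end.

Lemma conc_nil A B : conc A B [] = A [] * B [].
Proof. rewrite conc_splits, lsum_splits_nil. reflexivity. Qed.

Lemma conc_cons A B a w : conc A B (a :: w) = A [] * B (a :: w) + conc (fun z => A (a :: z)) B w.
Proof. rewrite !conc_splits, lsum_splits_cons. reflexivity. Qed.

Lemma conc_snoc A B w a : conc A B (w ++ [a]) = conc A (fun z => B (z ++ [a])) w + A (w ++ [a]) * B [].
Proof. rewrite !conc_splits, lsum_splits_snoc. reflexivity. Qed.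

Lemma conc_ext_split A A' B B' w :
  (forall p q, w = p ++ q -> A p = A' p /\ B q = B' q) -> conc A B w = conc A' B' w.
Proof.
  intros H. rewrite !conc_splits. apply lsum_ext. intros [p q] Hin.
  destruct (H p q (splits_app _ _ _ Hin)) as [H1 H2]. simpl. rewrite H1, H2; auto.
Qed.

Lemma conc_zero_l B w : conc (fun _ => 0) B w = 0.
Proof. rewrite conc_splits. apply lsum_zero. intros; lra. Qed.

Lemma conc_zero_r A w : conc A (fun _ => 0) w = 0.
Proof. rewrite conc_splits. apply lsum_zero. intros; lra. Qed.

Lemma conc_plus_l A A' B w : conc (fun z => A z + A' z) B w = conc A B w + conc A' B w.
Proof. rewrite !conc_splits, <- lsum_plus. apply lsum_ext; intros; lra. Qed.

Lemma conc_scal_l c A B w : conc (fun z => c * A z) B w = c * conc A B w.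
Proof. rewrite !conc_splits, <- lsum_scal. apply lsum_ext; intros; lra. Qed.

Lemma conc_scal_r c A B w : conc A (fun z => c * B z) w = c * conc A B w.
Proof. rewrite !conc_splits, <- lsum_scal. apply lsum_ext; intros; lra. Qed.

Lemma conc_e_nil_l B w : conc e_nil B w = B w.
Proof.
  destruct w as [|a w].
  - rewrite conc_nil; simpl; lra.
  - rewrite conc_cons. simpl. rewrite conc_zero_l. lra.
Qed.

Lemma conc_e_nil_r A w : conc A e_nil w = A w.
Proof.
  destruct (snoc_case w) as [->|[w' [a ->]]].
  - rewrite conc_nil; simpl; lra.
  - rewrite conc_snoc, (conc_ext_split A A _ (fun _ => 0)).
    + rewrite conc_zero_r. simpl. lra.
    + intros; split; auto. destruct q; reflexivity.
Qed.

Lemma conc_assoc A B C w : conc (conc A B) C w = conc A (conc B C) w.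
Proof.
  revert A. induction w as [|a w IH]; intros A.
  - rewrite !conc_nil. lra.
  - rewrite !conc_cons, conc_nil.
    rewrite (conc_ext_split (fun z => conc A B (a :: z))
               (fun z => A [] * B (a :: z) + conc (fun z => A (a :: z)) B z) C C).
    2:{ intros; split; auto. apply conc_cons. }
    rewrite conc_plus_l, conc_scal_l, IH. ring.
Qed.

Lemma e_letter_cons a i z : e_letter a (i :: z) = (if Nat.eqb a i then 1 else 0) * e_nil z.
Proof. destruct z; simpl; [destruct (Nat.eqb a i)|]; ring. Qed.

Lemma e_letter_snoc a z j : e_letter a (z ++ [j]) = (if Nat.eqb a j then 1 else 0) * e_nil z.
Proof.
  destruct z as [|c z].
  - simpl. destruct (Nat.eqb a j); ring.
  - simpl. destruct z; simpl; ring.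
Qed.

Lemma conc_e_letter_l Y a i w : conc (e_letter a) Y (i :: w) = (if Nat.eqb a i then 1 else 0) * Y w.
Proof.
  rewrite conc_cons. simpl (e_letter a []). rewrite Rmult_0_l, Rplus_0_l.
  rewrite (conc_ext_split _ (fun z => (if Nat.eqb a i then 1 else 0) * e_nil z) Y Y).
  - rewrite conc_scal_l, conc_e_nil_l. reflexivity.
  - intros; split; auto. apply e_letter_cons.
Qed.

Lemma conc_e_letter_r Y a w j : conc Y (e_letter a) (w ++ [j]) = (if Nat.eqb a j then 1 else 0) * Y w.
Proof.
  rewrite conc_snoc. simpl (e_letter a []). rewrite Rmult_0_r, Rplus_0_r.
  rewrite (conc_ext_split Y Y _ (fun z => (if Nat.eqb a j then 1 else 0) * e_nil z)).
  - rewrite conc_scal_r, conc_e_nil_r. reflexivity.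
  - intros; split; auto. apply e_letter_snoc.
Qed.

Lemma shr_nil_r u : shr u [] = [u].
Proof. destruct u; reflexivity. Qed.

Lemma shr_cons_cons a u b v :
  shr (a :: u) (b :: v) = map (cons a) (shr u (b :: v)) ++ map (cons b) (shr (a :: u) v).
Proof. reflexivity. Qed.

Lemma shr_length u v z : In z (shr u v) -> length z = (length u + length v)%nat.
Proof.
  revert v z. induction u as [|a u IHu]; intros v.
  - intros z. simpl. intros [<-|[]]; auto.
  - induction v as [|b v IHv]; intros z.
    + rewrite shr_nil_r. simpl. intros [<-|[]]. simpl. lia.
    + rewrite shr_cons_cons, in_app_iff, !in_map_iff. intros [[x [<- H]]|[x [<- H]]].
      * apply IHu in H. simpl in *. lia.
      * apply IHv in H. simpl in *. lia.
Qed.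

Lemma shr_Forall (P : nat -> Prop) u v z :
  List.Forall P u -> List.Forall P v -> In z (shr u v) -> List.Forall P z.
Proof.
  revert v z. induction u as [|a u IHu]; intros v.
  - intros z. simpl. intros _ Hv [<-|[]]; auto.
  - induction v as [|b v IHv]; intros z.
    + rewrite shr_nil_r. simpl. intros Hu _ [<-|[]]. auto.
    + intros Hu Hv. inversion Hu; inversion Hv; subst.
      rewrite shr_cons_cons, in_app_iff, !in_map_iff. intros [[x [<- H]]|[x [<- H]]].
      * constructor; auto. apply (IHu (b :: v)); auto.
      * constructor; auto.
Qed.

Lemma shuffle_nil_l v : shuffle [] v = [v].
Proof. unfold shuffle. simpl. rewrite rev_involutive. reflexivity. Qed.

Lemma shuffle_nil_r u : shuffle u [] = [u].
Proof. unfold shuffle. simpl. rewrite shr_nil_r. simpl. rewrite rev_involutive. reflexivity. Qed.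

Lemma shuffle_snoc u i v j : shuffle (u ++ [i]) (v ++ [j]) =
  map (fun x => x ++ [i]) (shuffle u (v ++ [j])) ++ map (fun x => x ++ [j]) (shuffle (u ++ [i]) v).
Proof.
  unfold shuffle. rewrite !rev_unit, shr_cons_cons, map_app, !map_map.
  f_equal; apply map_ext; intros; reflexivity.
Qed.

Lemma shuffle_length u v z : In z (shuffle u v) -> length z = (length u + length v)%nat.
Proof.
  unfold shuffle. rewrite in_map_iff. intros [x [<- H]]. apply shr_length in H.
  rewrite !length_rev in *. auto.
Qed.

Lemma shuffle_Forall (P : nat -> Prop) u v z :
  List.Forall P u -> List.Forall P v -> In z (shuffle u v) -> List.Forall P z.
Proof.
  unfold shuffle. rewrite in_map_iff. intros Hu Hv [x [<- H]]. apply Forall_rev.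
  apply (shr_Forall P _ _ _ (Forall_rev Hu) (Forall_rev Hv) H).
Qed.

(* [rshift p i] is the transpose of right multiplication by the letter [e_i]. *)
Definition rshift (p : series) (i : nat) : series := fun z => p (z ++ [i]).

Definition pair_shuffle (p : series) (u v : word) : R := lsum p (shuffle u v).

Lemma pair_shuffle_nil_l p v : pair_shuffle p [] v = p v.
Proof. unfold pair_shuffle. rewrite shuffle_nil_l. simpl. lra. Qed.

Lemma pair_shuffle_nil_r p u : pair_shuffle p u [] = p u.
Proof. unfold pair_shuffle. rewrite shuffle_nil_r. simpl. lra. Qed.

Lemma pair_shuffle_snoc_snoc p u i v j :
  pair_shuffle p (u ++ [i]) (v ++ [j]) =
  pair_shuffle (rshift p i) u (v ++ [j]) + pair_shuffle (rshift p j) (u ++ [i]) v.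
Proof. unfold pair_shuffle. rewrite shuffle_snoc, lsum_app, !lsum_map. reflexivity. Qed.

Lemma pair_shuffle_decomp p a v : ~ (a = [] /\ v = []) ->
  pair_shuffle p a v =
    (match rev a with [] => 0 | i :: ra => pair_shuffle (rshift p i) (rev ra) v end)
  + (match rev v with [] => 0 | j :: rv => pair_shuffle (rshift p j) a (rev rv) end).
Proof.
  intros Hne.
  destruct (snoc_case a) as [->|[a' [i ->]]]; destruct (snoc_case v) as [->|[v' [j ->]]];
    rewrite ?rev_unit, ?rev_involutive; cbn [rev].
  - tauto.
  - rewrite !pair_shuffle_nil_l. unfold rshift. lra.
  - rewrite !pair_shuffle_nil_r. unfold rshift. lra.
  - apply pair_shuffle_snoc_snoc.
Qed.

Lemma pair_shuffle_ext f g u v : (forall z, f z = g z) -> pair_shuffle f u v = pair_shuffle g u v.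
Proof. intros H; unfold pair_shuffle; apply lsum_ext; auto. Qed.

Lemma pair_shuffle_plus f g u v :
  pair_shuffle (fun z => f z + g z) u v = pair_shuffle f u v + pair_shuffle g u v.
Proof. unfold pair_shuffle; apply lsum_plus. Qed.

Lemma pair_shuffle_scal_r f c u v : pair_shuffle (fun z => f z * c) u v = pair_shuffle f u v * c.
Proof. unfold pair_shuffle; apply lsum_scal_r. Qed.

Lemma pair_shuffle_ext_length p q u v :
  (forall z, length z = (length u + length v)%nat -> q z = p z) -> pair_shuffle p u v = pair_shuffle q u v.
Proof.
  intros H. unfold pair_shuffle. apply lsum_ext. intros z Hz. symmetry.
  apply H, (shuffle_length u v z Hz).
Qed.

Lemma pair_shuffle_zero_length p u v :
  (forall z, length z = (length u + length v)%nat -> p z = 0) -> pair_shuffle p u v = 0.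
Proof.
  intros H. unfold pair_shuffle. apply lsum_zero. intros z Hz. apply H, (shuffle_length u v z Hz).
Qed.

Lemma pair_shuffle_lsum p u v : pair_shuffle p u v = lsum p (shuffle u v).
Proof. reflexivity. Qed.

Definition coproduct_sum (A B : series) (u v : word) : R :=
  lsum (fun uu => lsum (fun vv =>
    pair_shuffle A (fst uu) (fst vv) * pair_shuffle B (snd uu) (snd vv)) (splits v)) (splits u).

Lemma coproduct_sum_nil_l A B v : coproduct_sum A B [] v = conc A B v.
Proof.
  unfold coproduct_sum. rewrite conc_splits, lsum_splits_nil. apply lsum_ext. intros vv _.
  cbn [fst snd]. rewrite !pair_shuffle_nil_l. reflexivity.
Qed.

Lemma coproduct_sum_nil_r A B u : coproduct_sum A B u [] = conc A B u.
Proof.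
  unfold coproduct_sum. rewrite conc_splits. apply lsum_ext. intros uu _.
  rewrite lsum_splits_nil. cbn [fst snd]. rewrite !pair_shuffle_nil_r. reflexivity.
Qed.

Lemma rshift_conc A B i z : rshift (conc A B) i z = conc A (rshift B i) z + rshift A i z * B [].
Proof. unfold rshift. apply conc_snoc. Qed.

Lemma pair_shuffle_conc A B u v : pair_shuffle (conc A B) u v = coproduct_sum A B u v.
Proof.
  remember (length u + length v)%nat as n eqn:En. revert u v A B En.
  induction n as [n IH] using lt_wf_ind; intros u v A B En.
  destruct (snoc_case u) as [->|[u' [i ->]]].
  { rewrite coproduct_sum_nil_l, pair_shuffle_nil_l. reflexivity. }
  destruct (snoc_case v) as [->|[v' [j ->]]].
  { rewrite coproduct_sum_nil_r, pair_shuffle_nil_r. reflexivity. }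
  assert (IH' : forall u v A B, (length u + length v < n)%nat ->
            pair_shuffle (conc A B) u v = coproduct_sum A B u v) by (intros; eapply IH; eauto).
  rewrite !length_app in En. simpl in En.
  rewrite pair_shuffle_snoc_snoc, (pair_shuffle_ext _ _ _ _ (rshift_conc A B i)),
    (pair_shuffle_ext _ _ _ _ (rshift_conc A B j)), !pair_shuffle_plus, !pair_shuffle_scal_r.
  rewrite !IH' by (rewrite ?length_app; simpl; lia).
  assert (E : pair_shuffle (rshift A i) u' (v' ++ [j]) * B [] + pair_shuffle (rshift A j) (u' ++ [i]) v' * B []
              = pair_shuffle A (u' ++ [i]) (v' ++ [j]) * B []) by (rewrite pair_shuffle_snoc_snoc; ring).
  transitivity (coproduct_sum A (rshift B i) u' (v' ++ [j]) + coproduct_sum A (rshift B j) (u' ++ [i]) v'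
                + pair_shuffle A (u' ++ [i]) (v' ++ [j]) * B []); [rewrite <- E; ring|].
  unfold coproduct_sum. repeat setoid_rewrite lsum_splits_snoc. cbn [fst snd].
  repeat setoid_rewrite pair_shuffle_snoc_snoc. repeat setoid_rewrite pair_shuffle_nil_l.
  repeat setoid_rewrite pair_shuffle_nil_r. repeat setoid_rewrite Rmult_plus_distr_l.
  repeat setoid_rewrite lsum_plus. unfold rshift. ring.
Qed.

(** * Friedrichs' criterion *)

Definition rev_shuffle_sum (g : nat -> nat -> R) (p : series) (w : word) : R :=
  lsum (fun xv : word * word =>
    g (length (fst xv)) (length (snd xv)) * pair_shuffle p (rev (fst xv)) (snd xv)) (splits w).

Lemma rev_shuffle_sum_rec g p i w'' w' j : i :: w'' = w' ++ [j] ->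
  rev_shuffle_sum g p (i :: w'') =
    lsum (fun xv : word * word => g (length (fst xv)) (S (length (snd xv))) *
            pair_shuffle (rshift p j) (rev (fst xv)) (snd xv)) (splits w')
  + lsum (fun xv : word * word => g (S (length (fst xv))) (length (snd xv)) *
            pair_shuffle (rshift p i) (rev (fst xv)) (snd xv)) (splits w'').
Proof.
  intros Ew. unfold rev_shuffle_sum.
  set (f1 := fun xv : word * word => g (length (fst xv)) (length (snd xv)) *
     (match fst xv with [] => 0 | i' :: x' => pair_shuffle (rshift p i') (rev x') (snd xv) end)).
  set (f2 := fun xv : word * word => g (length (fst xv)) (length (snd xv)) *
     (match rev (snd xv) with [] => 0 | j' :: rv => pair_shuffle (rshift p j') (rev (fst xv)) (rev rv) end)).
  transitivity (lsum f1 (splits (i :: w'')) + lsum f2 (splits (i :: w''))).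
  { rewrite <- lsum_plus. apply lsum_ext. intros [x v] Hin. apply splits_app in Hin.
    unfold f1, f2; cbn [fst snd]. rewrite <- Rmult_plus_distr_l, pair_shuffle_decomp, rev_involutive.
    - reflexivity.
    - intros [E1 E2]. apply (f_equal (@length nat)) in E1. rewrite length_rev in E1.
      destruct x; [subst; discriminate|discriminate]. }
  rewrite Rplus_comm. f_equal.
  - rewrite Ew, lsum_splits_snoc. unfold f2. cbn [fst snd rev]. rewrite Rmult_0_r, Rplus_0_r.
    apply lsum_ext. intros [x v] _. cbn [fst snd]. rewrite rev_unit, rev_involutive, length_app.
    simpl. rewrite Nat.add_1_r. reflexivity.
  - rewrite lsum_splits_cons. unfold f1. cbn [fst snd]. rewrite Rmult_0_r, Rplus_0_l.
    apply lsum_ext. intros [x v] _. reflexivity.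
Qed.

(* The transposes of the convolutions S * id and S * D, with S the antipode and
   D the degree operator of the shuffle Hopf algebra. *)
Definition antipode_sum := rev_shuffle_sum (fun a _ => (-1) ^ a).
Definition dynkin := rev_shuffle_sum (fun a b => (-1) ^ a * INR b).

Lemma antipode_sum_nil p : antipode_sum p [] = p [].
Proof.
  unfold antipode_sum, rev_shuffle_sum. rewrite lsum_splits_nil. cbn [fst snd length rev].
  rewrite pair_shuffle_nil_l. simpl. ring.
Qed.

Lemma antipode_sum_counit p w : antipode_sum p w = match w with [] => p [] | _ => 0 end.
Proof.
  remember (length w) as n eqn:En. revert p w En.
  induction n as [n IH] using lt_wf_ind; intros p w En.
  destruct w as [|i w'']; [apply antipode_sum_nil|].
  destruct (snoc_case (i :: w'')) as [E|[w' [j E]]]; [discriminate|].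
  assert (Lw : length (i :: w'') = S (length w')) by (rewrite E, length_app; simpl; lia).
  unfold antipode_sum. rewrite (rev_shuffle_sum_rec _ _ _ _ _ _ E).
  match goal with |- lsum ?F (splits w') + _ = _ =>
    change (lsum F (splits w')) with (antipode_sum (rshift p j) w') end.
  match goal with |- _ + lsum ?F (splits w'') = _ =>
    replace (lsum F (splits w'')) with ((-1) * antipode_sum (rshift p i) w'') end.
  2:{ unfold antipode_sum, rev_shuffle_sum. rewrite <- lsum_scal. apply lsum_ext. intros; simpl; ring. }
  rewrite !(IH (length w')) by (simpl in *; lia).
  destruct w'' as [|c w0]; destruct w' as [|c' w1]; simpl in Lw; try lia.
  - simpl in E. injection E as ->. unfold rshift. simpl. ring.
  - ring.
Qed.

Lemma dynkin_nil p : dynkin p [] = 0.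
Proof. unfold dynkin, rev_shuffle_sum. rewrite lsum_splits_nil. simpl. ring. Qed.

Lemma dynkin_rec p i w'' w' j : i :: w'' = w' ++ [j] ->
  dynkin p (i :: w'') =
  dynkin (rshift p j) w' + (match w' with [] => p [j] | _ => 0 end) - dynkin (rshift p i) w''.
Proof.
  intros E. unfold dynkin. rewrite (rev_shuffle_sum_rec _ _ _ _ _ _ E).
  replace (match w' with [] => p [j] | _ => 0 end) with (antipode_sum (rshift p j) w')
    by (rewrite antipode_sum_counit; destruct w'; reflexivity).
  unfold antipode_sum, rev_shuffle_sum.
  match goal with |- ?A + ?X = ?B + ?C - ?Y => replace Y with ((-1) * X); [replace A with (B + C)|] end.
  - ring.
  - rewrite <- lsum_plus. apply lsum_ext; intros; rewrite ?S_INR; simpl; ring.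
  - rewrite <- lsum_scal. apply lsum_ext; intros; rewrite ?S_INR; simpl; ring.
Qed.

Lemma lie_lsum d (l : list nat) (f : nat -> series) :
  (forall a, In a l -> is_lie d (f a)) -> is_lie d (fun w => lsum (fun a => f a w) l).
Proof.
  induction l as [|a l IH]; intros H.
  - apply lie_zero.
  - apply lie_add; [apply H; left; auto|apply IH; intros; apply H; right; auto].
Qed.

Lemma lie_invalid d y : is_lie d y -> forall w, ~ valid d w -> y w = 0.
Proof.
  assert (Hconc : forall w x z, ~ valid d w -> (forall w, ~ valid d w -> x w = 0) ->
            (forall w, ~ valid d w -> z w = 0) -> conc x z w = 0).
  { intros w x z Hw Hx Hy. rewrite conc_splits. apply lsum_zero. intros [p q] Hin.
    apply splits_app in Hin. subst. cbn [fst snd].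
    destruct (classic (valid d p)) as [Vp|Vp]; [|rewrite Hx; auto; lra].
    destruct (classic (valid d q)) as [Vq|Vq]; [|rewrite Hy; auto; lra].
    exfalso. apply Hw. apply Forall_app; auto. }
  induction 1; intros w Hw.
  - unfold e_letter. destruct w as [|c [|c' w]]; auto.
    destruct (Nat.eqb i c) eqn:E; auto. apply Nat.eqb_eq in E. subst. exfalso; apply Hw.
    constructor; auto.
  - reflexivity.
  - rewrite IHis_lie1, IHis_lie2; auto; lra.
  - rewrite IHis_lie; auto; lra.
  - rewrite !Hconc; auto; lra.
  - rewrite <- H. auto.
Qed.

Lemma dynkin_bracket_expansion d n p (ys : nat -> series) :
  (forall a w, valid d w -> (length w <= n)%nat -> ys a w = dynkin (rshift p a) w) ->
  forall w, valid d w -> (length w <= S n)%nat ->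
  lsum (fun a => (conc (ys a) (e_letter a) w - conc (e_letter a) (ys a) w) + p [a] * e_letter a w)
       (seq 1 d) = dynkin p w.
Proof.
  intros Hys w Vw Hw. destruct w as [|i w''].
  { rewrite dynkin_nil. apply lsum_zero. intros a _. rewrite !conc_nil. simpl. ring. }
  destruct (snoc_case (i :: w'')) as [E|[w' [j E]]]; [discriminate|].
  rewrite (dynkin_rec _ _ _ _ _ E).
  assert (Vi : (1 <= i <= d)%nat) by (inversion Vw; auto).
  assert (Vw'' : valid d w'') by (inversion Vw; auto).
  rewrite E in Vw. apply Forall_app in Vw. destruct Vw as [Vw' Vj]. inversion Vj as [|? ? Hj].
  assert (Lw : length (i :: w'') = S (length w')) by (rewrite E, length_app; simpl; lia).
  rewrite !lsum_plus, lsum_minus.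
  rewrite (lsum_ext _ (fun a => (if Nat.eqb a j then 1 else 0) * ys a w'))
    by (intros; rewrite E; apply conc_e_letter_r).
  rewrite (lsum_ext (fun a => conc (e_letter a) (ys a) (i :: w''))
             (fun a => (if Nat.eqb a i then 1 else 0) * ys a w''))
    by (intros; apply conc_e_letter_l).
  rewrite !lsum_seq_delta, !Hys by (auto; simpl in Hw, Lw; lia).
  assert (Hl : lsum (fun a => p [a] * e_letter a (i :: w'')) (seq 1 d)
               = match w' with [] => p [j] | _ => 0 end).
  { destruct w' as [|c w1].
    - simpl in E. injection E as -> ->.
      rewrite (lsum_ext _ (fun a => (if Nat.eqb a j then 1 else 0) * p [a]))
        by (intros a _; simpl; destruct (Nat.eqb a j); ring).
      apply lsum_seq_delta; lia.
    - apply lsum_zero. intros a _. rewrite E. simpl. destruct w1; simpl; ring. }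
  rewrite Hl. ring.
Qed.

Lemma dynkin_lie_upto d n : forall p, exists y, is_lie d y /\
  forall w, valid d w -> (length w <= n)%nat -> y w = dynkin p w.
Proof.
  induction n as [|n IH]; intros p.
  - exists (fun _ => 0). split; [apply lie_zero|]. intros w _ Hw.
    destruct w; [|simpl in Hw; lia]. rewrite dynkin_nil. reflexivity.
  - destruct (choice (fun a y => is_lie d y /\
                        forall w, valid d w -> (length w <= n)%nat -> y w = dynkin (rshift p a) w)
                     (fun a => IH (rshift p a))) as [ys Hys].
    exists (fun w => lsum (fun a => (conc (ys a) (e_letter a) w - conc (e_letter a) (ys a) w)
                                   + p [a] * e_letter a w) (seq 1 d)).
    split.
    + apply (lie_lsum d (seq 1 d) (fun a w => (conc (ys a) (e_letter a) w - conc (e_letter a) (ys a) w)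
                                              + p [a] * e_letter a w)).
      intros a Ha. apply in_seq in Ha.
      apply lie_add; [apply lie_bracket; [apply Hys|apply lie_gen; lia]|].
      apply lie_scal, lie_gen; lia.
    + apply (dynkin_bracket_expansion d n). intros a. apply Hys.
Qed.

Definition primitive (d N : nat) (p : series) : Prop :=
  forall a b, valid d a -> valid d b -> a <> [] -> b <> [] -> (length a + length b <= N)%nat ->
  pair_shuffle p a b = 0.

Lemma dynkin_primitive d N p : primitive d N p -> forall w, valid d w -> (length w <= N)%nat ->
  dynkin p w = INR (length w) * p w.
Proof.
  intros Hp w Vw Hw. destruct w as [|c w0]; [rewrite dynkin_nil; simpl; ring|].
  unfold dynkin, rev_shuffle_sum. rewrite lsum_splits_cons. cbn [fst snd length rev].
  rewrite pair_shuffle_nil_l, lsum_zero; [simpl; ring|].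
  intros [x v] Hin. apply splits_app in Hin. subst w0. cbn [fst snd length].
  destruct v as [|b v]; [simpl; ring|].
  inversion Vw as [|? ? Vc Vxv]; subst. apply Forall_app in Vxv. destruct Vxv as [Vx Vbv].
  rewrite Hp; [ring| | | |discriminate|].
  - apply Forall_app. split; [apply Forall_rev|constructor]; auto.
  - exact Vbv.
  - intros H. apply (f_equal (@length nat)) in H. rewrite length_app in H. simpl in H. lia.
  - rewrite length_app, length_rev. simpl in Hw. rewrite length_app in Hw. simpl in *. lia.
Qed.

Definition homog_part (p : series) (n : nat) : series :=
  fun z => if Nat.eqb (length z) n then p z else 0.

Lemma dynkin_homog_part p n w :
  dynkin (homog_part p n) w = if Nat.eqb (length w) n then dynkin p w else 0.
Proof.
  unfold dynkin, rev_shuffle_sum. destruct (Nat.eqb (length w) n) eqn:E.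
  - apply lsum_ext. intros [x v] Hin. apply splits_app in Hin. cbn [fst snd]. f_equal.
    apply pair_shuffle_ext_length. intros z Hz. unfold homog_part.
    apply Nat.eqb_eq in E. rewrite length_rev in Hz. subst w. rewrite length_app in E.
    replace (Nat.eqb (length z) n) with true; auto. symmetry. apply Nat.eqb_eq. lia.
  - apply lsum_zero. intros [x v] Hin. apply splits_app in Hin. cbn [fst snd].
    rewrite pair_shuffle_zero_length; [ring|]. intros z Hz. unfold homog_part.
    rewrite length_rev in Hz. subst w. rewrite length_app in E.
    replace (Nat.eqb (length z) n) with false; auto.
    symmetry. apply Nat.eqb_neq. apply Nat.eqb_neq in E. lia.
Qed.

(* [p] is the sum over [n >= 1] of [dynkin (homog_part p n) / n], since on the
   degree-[n] part of a primitive element [dynkin] is multiplication by [n]. *)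
Theorem friedrichs_criterion d N p : p [] = 0 -> (forall w, ~ valid d w -> p w = 0) ->
  (forall w, (N < length w)%nat -> p w = 0) -> primitive d N p -> lie_trunc d N p.
Proof.
  intros H0 Hinv Hlong Hp.
  destruct (choice (fun n y => is_lie d y /\
                      forall w, valid d w -> (length w <= N)%nat -> y w = dynkin (homog_part p n) w)
                   (fun n => dynkin_lie_upto d N (homog_part p n))) as [yh Hyh].
  exists (fun w => lsum (fun n => / INR n * yh n w) (seq 1 N)). split.
  { apply (lie_lsum d (seq 1 N) (fun n w => / INR n * yh n w)). intros n _. apply lie_scal, Hyh. }
  intros w. destruct (Nat.leb (length w) N) eqn:EL; [|apply Hlong, Nat.leb_gt, EL].
  apply Nat.leb_le in EL. destruct (classic (valid d w)) as [Vw|Vw].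
  - rewrite (lsum_ext _ (fun n => (if Nat.eqb n (length w) then 1 else 0) * (/ INR n * (INR (length w) * p w)))).
    2:{ intros n Hn. rewrite (proj2 (Hyh n)), dynkin_homog_part, Nat.eqb_sym by auto.
        destruct (Nat.eqb n (length w)); [rewrite (dynkin_primitive d N p Hp w Vw EL)|]; ring. }
    destruct w as [|c w0].
    + rewrite lsum_zero; auto. intros n Hn. apply in_seq in Hn. simpl.
      replace (Nat.eqb n 0) with false by (symmetry; apply Nat.eqb_neq; lia). ring.
    + rewrite lsum_seq_delta by (simpl in *; lia). field. apply not_0_INR. simpl; lia.
  - rewrite Hinv by auto. symmetry. apply lsum_zero. intros n _.
    rewrite (lie_invalid d (yh n)); [ring|apply Hyh|auto].
Qed.

Lemma pair_shuffle_e_nil a b : pair_shuffle e_nil a b = e_nil a * e_nil b.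
Proof.
  destruct a as [|c a]; [rewrite pair_shuffle_nil_l; simpl; ring|].
  rewrite pair_shuffle_zero_length; [simpl; ring|].
  intros z Hz. destruct z; simpl in *; [lia|reflexivity].
Qed.

Lemma pair_shuffle_primitive d n P a b : primitive d n P -> P [] = 0 ->
  valid d a -> valid d b -> (length a + length b <= n)%nat ->
  pair_shuffle P a b = (match a with [] => P b | _ => 0 end) + (match b with [] => P a | _ => 0 end).
Proof.
  intros HP H0 Va Vb Hn. destruct a as [|c a]; destruct b as [|e b].
  - rewrite pair_shuffle_nil_l, H0. ring.
  - rewrite pair_shuffle_nil_l. ring.
  - rewrite pair_shuffle_nil_r. ring.
  - rewrite HP; auto; try discriminate. ring.
Qed.

(* Leibniz rule: if [A] is a character of the shuffle algebra (below the
   degree of [a ⧢ b]) and [P] is primitive, then [A (x) P] is a derivation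
   at [A]. *)
Lemma coproduct_sum_character_primitive d (A P : series) a b : valid d a -> valid d b ->
  primitive d (length a + length b) P -> P [] = 0 ->
  (forall a1 b1, valid d a1 -> valid d b1 -> (length a1 + length b1 < length a + length b)%nat ->
     pair_shuffle A a1 b1 = A a1 * A b1) ->
  coproduct_sum A P a b = conc A P a * A b + A a * conc A P b.
Proof.
  intros Va Vb HP H0 HA. unfold coproduct_sum.
  rewrite (lsum_ext _ (fun uu : word * word =>
      lsum (fun vv : word * word => pair_shuffle A (fst uu) (fst vv) *
                                    (match snd uu with [] => P (snd vv) | _ => 0 end)) (splits b)
    + lsum (fun vv : word * word => pair_shuffle A (fst uu) (fst vv) *
                                    (match snd vv with [] => P (snd uu) | _ => 0 end)) (splits b))).
  2:{ intros [a1 a2] Ha. rewrite <- lsum_plus. apply lsum_ext. intros [b1 b2] Hb. cbn [fst snd].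
      destruct (splits_valid d a a1 a2 Ha Va) as [Va1 [Va2 La]].
      destruct (splits_valid d b b1 b2 Hb Vb) as [Vb1 [Vb2 Lb]].
      rewrite (pair_shuffle_primitive d (length a + length b) P) by (auto; lia). ring. }
  rewrite lsum_plus, Rplus_comm. f_equal.
  - rewrite (lsum_ext _ (fun uu : word * word => pair_shuffle A (fst uu) b * P (snd uu))).
    2:{ intros [a1 a2] _. cbn [fst snd].
        rewrite <- (lsum_splits_last (fun b1 => pair_shuffle A a1 b1 * P a2) b).
        apply lsum_ext. intros [b1 b2] _. cbn [fst snd]. destruct b2; ring. }
    rewrite conc_splits, <- lsum_scal_r. apply lsum_ext. intros [a1 a2] Ha. cbn [fst snd].
    destruct (splits_valid d a a1 a2 Ha Va) as [Va1 [Va2 La]].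
    destruct a2 as [|c a2]; [rewrite H0; ring|].
    rewrite HA; auto; [ring|]. simpl in La. lia.
  - rewrite (lsum_ext _ (fun uu : word * word => match snd uu with
        | [] => lsum (fun vv : word * word => pair_shuffle A (fst uu) (fst vv) * P (snd vv)) (splits b)
        | _ => 0 end)).
    2:{ intros [a1 a2] _. cbn [fst snd]. destruct a2; [reflexivity|]. apply lsum_zero; intros; ring. }
    rewrite (lsum_splits_last (fun a1 => lsum (fun vv : word * word => pair_shuffle A a1 (fst vv) * P (snd vv)) (splits b))).
    rewrite conc_splits, <- lsum_scal. apply lsum_ext. intros [b1 b2] Hb. cbn [fst snd].
    destruct (splits_valid d b b1 b2 Hb Vb) as [Vb1 [Vb2 Lb]].
    destruct b2 as [|c b2]; [rewrite H0; ring|].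
    rewrite HA; auto; [ring|]. simpl in Lb. lia.
Qed.

(** * One-sided derivatives on an interval *)

Definition punctured (a b x : R) := within (fun y => a <= y <= b /\ y <> x) (locally x).

Lemma punctured_proper a b x : a < b -> a <= x <= b -> ProperFilter' (punctured a b x).
Proof.
  intros Hab Hx. constructor; [|exact _].
  unfold punctured, within. intros [eps He].
  set (h := Rmin (eps / 2) ((b - a) / 2)).
  assert (He2 := cond_pos eps).
  assert (Hh : 0 < h) by (apply Rmin_pos; lra).
  assert (Hh1 := Rmin_l (eps / 2) ((b - a) / 2)). assert (Hh2 := Rmin_r (eps / 2) ((b - a) / 2)).
  fold h in Hh1, Hh2.
  destruct (Rle_dec (x + h) b).
  - apply (He (x + h)); [|lra]. change (Rabs (x + h - x) < eps).
    rewrite Rabs_pos_eq; lra.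
  - apply (He (x - h)); [|lra]. change (Rabs (x - h - x) < eps).
    rewrite Rabs_minus_sym, Rabs_pos_eq; lra.
Qed.

Lemma punctured_eps a b x (P : R -> Prop) : punctured a b x P <->
  exists d : posreal, forall y, a <= y <= b -> y <> x -> Rabs (y - x) < d -> P y.
Proof.
  unfold punctured, within. split.
  - intros [d Hd]. exists d. intros y H1 H2 H3. apply Hd; auto.
  - intros [d Hd]. exists d. intros y H1 [H2 H3]. apply Hd; auto.
Qed.

Lemma filterlim_locally_R {F : (R -> Prop) -> Prop} {FF : Filter F} (f : R -> R) l :
  filterlim f F (locally l) <-> forall eps : posreal, F (fun y => Rabs (f y - l) < eps).
Proof. rewrite (@filterlim_locally R R_UniformSpace F FF f l). split; intros H eps; apply (H eps). Qed.

Lemma filterlim_plus_R {F : (R -> Prop) -> Prop} {FF : Filter F} (f g : R -> R) l1 l2 :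
  filterlim f F (locally l1) -> filterlim g F (locally l2) ->
  filterlim (fun y => f y + g y) F (locally (l1 + l2)).
Proof. intros H1 H2. exact (filterlim_comp_2 f g plus H1 H2 (filterlim_plus l1 l2)). Qed.

Lemma filterlim_mult_R {F : (R -> Prop) -> Prop} {FF : Filter F} (f g : R -> R) l1 l2 :
  filterlim f F (locally l1) -> filterlim g F (locally l2) ->
  filterlim (fun y => f y * g y) F (locally (l1 * l2)).
Proof. intros H1 H2. exact (filterlim_comp_2 f g mult H1 H2 (filterlim_mult l1 l2)). Qed.

Lemma deriv_within_eps a b f x l : has_deriv_within a b f x l <->
  forall eps : posreal, exists d : posreal, forall y, a <= y <= b -> y <> x -> Rabs (y - x) < d ->
    Rabs ((f y - f x) / (y - x) - l) < eps.
Proof.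
  change (has_deriv_within a b f x l)
    with (filterlim (fun y => (f y - f x) / (y - x)) (punctured a b x) (locally l)).
  rewrite filterlim_locally_R. split; intros H eps; apply punctured_eps, H.
Qed.

Lemma punctured_neq a b x : punctured a b x (fun y => y <> x).
Proof. apply punctured_eps. exists (mkposreal 1 Rlt_0_1). intros; auto. Qed.

Lemma deriv_within_filterlim a b f x l :
  has_deriv_within a b f x l -> filterlim f (punctured a b x) (locally (f x)).
Proof.
  intros H.
  assert (H2 : filterlim (fun y => f x + (f y - f x) / (y - x) * (y - x)) (punctured a b x)
                 (locally (f x + l * (x - x)))).
  { apply filterlim_plus_R; [apply filterlim_const|].
    apply filterlim_mult_R; [exact H|].
    apply filterlim_plus_R; [|apply filterlim_const].
    apply filterlim_locally_R. intros eps. apply punctured_eps. exists eps. intros; auto. }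
  replace (f x + l * (x - x)) with (f x) in H2 by ring.
  refine (filterlim_ext_loc _ _ _ H2).
  apply (filter_imp (fun y => y <> x)); [|apply punctured_neq].
  intros y Hy. field. lra.
Qed.

Definition continuous_within (a b : R) (f : R -> R) (x : R) : Prop :=
  forall eps : posreal, exists d : posreal,
    forall y, a <= y <= b -> Rabs (y - x) < d -> Rabs (f y - f x) < eps.

Lemma deriv_within_continuous a b f x l : has_deriv_within a b f x l -> continuous_within a b f x.
Proof.
  intros H eps. apply deriv_within_filterlim in H.
  destruct (proj1 (punctured_eps _ _ _ _) (proj1 (filterlim_locally_R f (f x)) H eps)) as [d Hd].
  exists d. intros y Hy Hyd.
  destruct (Req_dec y x) as [->|Hne]; [rewrite Rminus_diag, Rabs_R0; apply cond_pos|].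
  apply Hd; auto.
Qed.

Lemma deriv_within_unique a b f x l1 l2 : a < b -> a <= x <= b ->
  has_deriv_within a b f x l1 -> has_deriv_within a b f x l2 -> l1 = l2.
Proof.
  intros Hab Hx H1 H2.
  exact (@filterlim_locally_unique R R_AbsRing R_NormedModule (punctured a b x)
           (punctured_proper a b x Hab Hx) _ l1 l2 H1 H2).
Qed.

Lemma deriv_within_ext_loc a b f g x l (d : posreal) :
  (forall y, a <= y <= b -> Rabs (y - x) < d -> f y = g y) -> f x = g x ->
  has_deriv_within a b f x l -> has_deriv_within a b g x l.
Proof.
  intros Hfg Hx H. refine (filterlim_ext_loc _ _ _ H).
  apply punctured_eps. exists d. intros y Hy Hne Hd. simpl. rewrite Hfg, Hx; auto.
Qed.

Lemma deriv_within_ext a b f g x l : a <= x <= b ->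
  (forall y, a <= y <= b -> f y = g y) -> has_deriv_within a b f x l -> has_deriv_within a b g x l.
Proof. intros Hx Hfg. apply (deriv_within_ext_loc a b f g x l (mkposreal 1 Rlt_0_1)); auto. Qed.

Lemma deriv_within_const a b c x : has_deriv_within a b (fun _ => c) x 0.
Proof.
  apply (filterlim_ext (fun _ => 0)); [intros y; unfold Rdiv; ring|apply filterlim_const].
Qed.

Lemma deriv_within_plus a b f g x lf lg : has_deriv_within a b f x lf -> has_deriv_within a b g x lg ->
  has_deriv_within a b (fun y => f y + g y) x (lf + lg).
Proof.
  intros H1 H2. apply (filterlim_ext (fun y => (f y - f x) / (y - x) + (g y - g x) / (y - x))).
  - intros y. unfold Rdiv. ring.
  - apply filterlim_plus_R; auto.
Qed.

Lemma deriv_within_scal a b c f x l : has_deriv_within a b f x l ->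
  has_deriv_within a b (fun y => c * f y) x (c * l).
Proof.
  intros H. apply (filterlim_ext (fun y => c * ((f y - f x) / (y - x)))).
  - intros y. unfold Rdiv. ring.
  - apply filterlim_mult_R; [apply filterlim_const|exact H].
Qed.

Lemma deriv_within_minus a b f g x lf lg : has_deriv_within a b f x lf -> has_deriv_within a b g x lg ->
  has_deriv_within a b (fun y => f y - g y) x (lf - lg).
Proof.
  intros H1 H2. apply (deriv_within_scal a b (-1)), (deriv_within_plus a b _ _ x _ _ H1) in H2.
  replace (lf - lg) with (lf + -1 * lg) by ring.
  refine (filterlim_ext _ _ _ H2). intros y. unfold Rdiv. ring.
Qed.

Lemma deriv_within_mult a b f g x lf lg : has_deriv_within a b f x lf -> has_deriv_within a b g x lg ->
  has_deriv_within a b (fun y => f y * g y) x (lf * g x + f x * lg).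
Proof.
  intros H1 H2. assert (Cg := deriv_within_filterlim _ _ _ _ _ H2).
  apply (filterlim_ext_loc (fun y => (f y - f x) / (y - x) * g y + f x * ((g y - g x) / (y - x)))).
  - apply (filter_imp (fun y => y <> x)); [|apply punctured_neq].
    intros y Hy. field. lra.
  - apply filterlim_plus_R; apply filterlim_mult_R; auto. apply filterlim_const.
Qed.

Lemma deriv_within_lsum {A : Type} a b (F : A -> R -> R) (G : A -> R) x (l : list A) :
  (forall i, In i l -> has_deriv_within a b (F i) x (G i)) ->
  has_deriv_within a b (fun y => lsum (fun i => F i y) l) x (lsum G l).
Proof.
  induction l as [|i l IH]; intros H; simpl.
  - apply deriv_within_const.
  - apply deriv_within_plus; [apply H; left; auto|apply IH; intros; apply H; right; auto].
Qed.

Lemma is_derive_deriv_within a b f x l : is_derive f x l -> has_deriv_within a b f x l.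
Proof.
  intros H. apply is_derive_Reals in H. apply deriv_within_eps. intros eps.
  destruct (H eps (cond_pos eps)) as [d Hd].
  exists d. intros y _ Hne Hyd. replace y with (x + (y - x)) at 1 by ring.
  apply Hd; auto. lra.
Qed.

Lemma deriv_within_is_derive a b f x l : a < x < b -> has_deriv_within a b f x l -> is_derive f x l.
Proof.
  intros Hx H. apply is_derive_Reals. intros eps Heps.
  destruct (proj1 (deriv_within_eps a b f x l) H (mkposreal eps Heps)) as [d Hd].
  assert (Hm : 0 < Rmin d (Rmin (x - a) (b - x))) by (apply Rmin_pos; [apply cond_pos|apply Rmin_pos; lra]).
  exists (mkposreal _ Hm). intros h Hh Hhd. simpl in Hhd.
  assert (H1 := Rmin_l d (Rmin (x - a) (b - x))). assert (H2 := Rmin_r d (Rmin (x - a) (b - x))).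
  assert (H3 := Rmin_l (x - a) (b - x)). assert (H4 := Rmin_r (x - a) (b - x)).
  assert (Hh' := Rabs_def2 _ _ Hhd).
  specialize (Hd (x + h)). replace (x + h - x) with h in Hd by ring. apply Hd; lra.
Qed.

Definition clamp (s t y : R) : R := Rmax s (Rmin t y).

Lemma clamp_in s t y : s <= t -> s <= clamp s t y <= t.
Proof. intros H. unfold clamp, Rmax, Rmin. repeat destruct Rle_dec; lra. Qed.

Lemma clamp_id s t y : s <= y <= t -> clamp s t y = y.
Proof. intros H. unfold clamp, Rmax, Rmin. repeat destruct Rle_dec; lra. Qed.

Lemma clamp_lipschitz s t y z : s <= t -> Rabs (clamp s t y - clamp s t z) <= Rabs (y - z).
Proof. intros H. unfold clamp, Rmax, Rmin. repeat destruct Rle_dec; unfold Rabs; repeat destruct Rcase_abs; lra. Qed.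

Lemma continuity_pt_clamp a b f s t : a <= s -> s <= t -> t <= b ->
  (forall y, s <= y <= t -> continuous_within a b f y) ->
  forall z, continuity_pt (fun y => f (clamp s t y)) z.
Proof.
  intros Has Hst Htb H z. apply continuity_pt_filterlim, filterlim_locally_R. intros eps.
  assert (Hc := clamp_in s t z Hst). destruct (H _ Hc eps) as [d Hd].
  exists d. intros y Hy. change (Rabs (y - z) < d) in Hy. apply Hd.
  - assert (H2 := clamp_in s t y Hst). lra.
  - eapply Rle_lt_trans; [apply clamp_lipschitz|]; auto.
Qed.

(* By the mean value theorem, applied to the continuous extension of [f]
   obtained by clamping. *)
Lemma deriv_within_zero_const a b f s t : a <= s -> s <= t -> t <= b ->
  (forall y, s <= y <= t -> exists l, has_deriv_within a b f y l) ->
  (forall y, s < y < t -> has_deriv_within a b f y 0) -> forall y, s <= y <= t -> f y = f s.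
Proof.
  intros Has Hst Htb Hex H0 y Hy.
  destruct (Req_dec s y) as [->|Hne]; auto.
  assert (Hc : forall z, continuity_pt (fun r => f (clamp s y r)) z).
  { apply (continuity_pt_clamp a b); try lra. intros r Hr.
    destruct (Hex r ltac:(lra)) as [l Hl]. exact (deriv_within_continuous _ _ _ _ _ Hl). }
  destruct (MVT_gen (fun r => f (clamp s y r)) s y (fun _ => 0)) as [c [_ Hc2]].
  - intros x Hx. rewrite Rmin_left, Rmax_right in Hx by lra.
    apply (is_derive_ext_loc f).
    + assert (Hm : 0 < Rmin (x - s) (y - x)) by (apply Rmin_pos; lra).
      exists (mkposreal _ Hm). intros r Hr. change (Rabs (r - x) < Rmin (x - s) (y - x)) in Hr.
      assert (H1 := Rmin_l (x - s) (y - x)). assert (H2 := Rmin_r (x - s) (y - x)).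
      apply Rabs_def2 in Hr. rewrite clamp_id; auto. lra.
    + apply (deriv_within_is_derive a b); [lra|]. apply H0. lra.
  - intros x _. apply Hc.
  - rewrite !clamp_id in Hc2 by lra. lra.
Qed.

Lemma is_derive_RInt_continuous (g : R -> R) s :
  (forall z, continuity_pt g z) -> forall t, is_derive (fun t => RInt g s t) t (g t).
Proof.
  intros Hg t. apply (is_derive_RInt g (fun t => RInt g s t) s t).
  - apply filter_forall. intros x. apply (@RInt_correct R_CompleteNormedModule).
    apply (@ex_RInt_continuous R_CompleteNormedModule).
    intros z _. apply continuity_pt_filterlim, Hg.
  - apply continuity_pt_filterlim, Hg.
Qed.

Lemma continuity_pt_lsum {A : Type} (F : A -> R -> R) (l : list A) x :
  (forall i, In i l -> continuity_pt (F i) x) -> continuity_pt (fun y => lsum (fun i => F i y) l) x.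
Proof.
  induction l as [|i l IH]; intros H; simpl.
  - apply continuity_pt_const. intros u v; reflexivity.
  - apply (continuity_pt_plus (F i) (fun y => lsum (fun i => F i y) l));
      [apply H; left; auto|apply IH; intros; apply H; right; auto].
Qed.

(** * Smoothness on an interval *)

Definition deriv_chain (a b : R) (n : nat) (f : R -> R) (F : nat -> R -> R) : Prop :=
  (forall x, a <= x <= b -> F O x = f x) /\
  (forall k x, (k < n)%nat -> a <= x <= b -> has_deriv_within a b (F k) x (F (S k) x)).

Definition Ck_on (a b : R) (n : nat) (f : R -> R) : Prop := exists F, deriv_chain a b n f F.

(* Unlike [smooth_on], this does not fix one sequence of derivatives, so
   closure under products follows by induction on the order. *)
Definition Cinf_on (a b : R) (f : R -> R) : Prop := forall n, Ck_on a b n f.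

Lemma Ck_on_ext a b n f g : (forall x, a <= x <= b -> f x = g x) -> Ck_on a b n f -> Ck_on a b n g.
Proof. intros H [F [H0 H1]]. exists F. split; auto. intros x Hx. rewrite H0, H; auto. Qed.

Lemma Ck_on_S a b n f g : (forall x, a <= x <= b -> has_deriv_within a b f x (g x)) ->
  Ck_on a b n g -> Ck_on a b (S n) f.
Proof.
  intros Hd [G [G0 G1]]. exists (fun k => match k with O => f | S k' => G k' end).
  split; auto. intros [|k] x Hk Hx.
  - rewrite G0; auto.
  - apply G1; auto. lia.
Qed.

Lemma Ck_on_S_inv a b n f : Ck_on a b (S n) f ->
  exists g, (forall x, a <= x <= b -> has_deriv_within a b f x (g x)) /\ Ck_on a b n g.
Proof.
  intros [F [F0 F1]]. exists (F 1%nat). split.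
  - intros x Hx. apply (deriv_within_ext a b (F O)); auto. apply F1; auto; lia.
  - exists (fun k => F (S k)). split; auto. intros k x Hk Hx. apply F1; auto; lia.
Qed.

Lemma Ck_on_pred a b n f : Ck_on a b (S n) f -> Ck_on a b n f.
Proof. intros [F [F0 F1]]. exists F. split; auto. Qed.

Lemma Ck_on_const a b n c : Ck_on a b n (fun _ => c).
Proof.
  exists (fun k => match k with O => fun _ => c | _ => fun _ => 0 end). split; auto.
  intros [|k] x _ _; apply deriv_within_const.
Qed.

Lemma Ck_on_plus a b n f g : Ck_on a b n f -> Ck_on a b n g -> Ck_on a b n (fun y => f y + g y).
Proof.
  intros [F [F0 F1]] [G [G0 G1]]. exists (fun k y => F k y + G k y). split.
  - intros x Hx. rewrite F0, G0; auto.
  - intros k x Hk Hx. apply deriv_within_plus; auto.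
Qed.

Lemma Ck_on_minus a b n f g : Ck_on a b n f -> Ck_on a b n g -> Ck_on a b n (fun y => f y - g y).
Proof.
  intros [F [F0 F1]] [G [G0 G1]]. exists (fun k y => F k y - G k y). split.
  - intros x Hx. rewrite F0, G0; auto.
  - intros k x Hk Hx. apply deriv_within_minus; auto.
Qed.

Lemma Ck_on_mult a b n : forall f g, Ck_on a b n f -> Ck_on a b n g -> Ck_on a b n (fun y => f y * g y).
Proof.
  induction n as [|n IH]; intros f g Hf Hg.
  - exists (fun _ y => f y * g y). split; auto. intros; lia.
  - destruct (Ck_on_S_inv _ _ _ _ Hf) as [f' [Df Cf']].
    destruct (Ck_on_S_inv _ _ _ _ Hg) as [g' [Dg Cg']].
    apply (Ck_on_S a b n _ (fun y => f' y * g y + f y * g' y)).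
    + intros x Hx. apply deriv_within_mult; auto.
    + apply Ck_on_plus; apply IH; auto; apply Ck_on_pred; auto.
Qed.

Lemma Ck_on_lsum {A : Type} a b n (F : A -> R -> R) (l : list A) :
  (forall i, In i l -> Ck_on a b n (F i)) -> Ck_on a b n (fun y => lsum (fun i => F i y) l).
Proof.
  induction l as [|i l IH]; intros H; simpl.
  - apply Ck_on_const.
  - apply Ck_on_plus; [apply H; left; auto|apply IH; intros; apply H; right; auto].
Qed.

Lemma Cinf_on_ext a b f g : (forall x, a <= x <= b -> f x = g x) -> Cinf_on a b f -> Cinf_on a b g.
Proof. intros H Hf n. apply (Ck_on_ext a b n f); auto. Qed.

Lemma Cinf_on_const a b c : Cinf_on a b (fun _ => c).
Proof. intros n; apply Ck_on_const. Qed.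

Lemma Cinf_on_minus a b f g : Cinf_on a b f -> Cinf_on a b g -> Cinf_on a b (fun y => f y - g y).
Proof. intros Hf Hg n; apply Ck_on_minus; auto. Qed.

Lemma Cinf_on_mult a b f g : Cinf_on a b f -> Cinf_on a b g -> Cinf_on a b (fun y => f y * g y).
Proof. intros Hf Hg n; apply Ck_on_mult; auto. Qed.

Lemma Cinf_on_lsum {A : Type} a b (F : A -> R -> R) (l : list A) :
  (forall i, In i l -> Cinf_on a b (F i)) -> Cinf_on a b (fun y => lsum (fun i => F i y) l).
Proof. intros H n. apply Ck_on_lsum. intros; apply H; auto. Qed.

Lemma Cinf_on_deriv a b f : Cinf_on a b f ->
  exists g, forall x, a <= x <= b -> has_deriv_within a b f x (g x).
Proof. intros H. destruct (Ck_on_S_inv a b O f (H 1%nat)) as [g [Hg _]]. exists g; auto. Qed.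

Lemma deriv_chain_agree a b n m f F G : a < b -> deriv_chain a b n f F -> deriv_chain a b m f G ->
  forall k, (k <= n)%nat -> (k <= m)%nat -> forall x, a <= x <= b -> F k x = G k x.
Proof.
  intros Hab [F0 F1] [G0 G1]. induction k as [|k IH]; intros Hn Hm x Hx.
  - rewrite F0, G0; auto.
  - apply (deriv_within_unique a b (F k) x _ _ Hab Hx); [apply F1; auto; lia|].
    apply (deriv_within_ext a b (G k) (F k) x _ Hx).
    + intros y Hy; symmetry; apply IH; auto; lia.
    + apply G1; auto; lia.
Qed.

Lemma Cinf_on_smooth_on a b f : a < b -> Cinf_on a b f -> smooth_on a b f.
Proof.
  intros Hab H. destruct (choice (fun n => deriv_chain a b n f) H) as [Fn HF].
  exists (fun k => Fn (S k) k). split.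
  - intros x Hx. apply (proj1 (HF 1%nat)); auto.
  - intros k x Hx.
    rewrite <- (deriv_chain_agree a b (S k) (S (S k)) f _ _ Hab (HF (S k)) (HF (S (S k))) (S k))
      by (auto; lia).
    apply (proj2 (HF (S k))); auto.
Qed.

Lemma smooth_on_Cinf_on a b f : smooth_on a b f -> Cinf_on a b f.
Proof. intros [F [F0 F1]] n. exists F. split; auto. Qed.

Lemma smooth_on_deriv a b f : smooth_on a b f ->
  exists g, Cinf_on a b g /\ forall x, a <= x <= b -> has_deriv_within a b f x (g x).
Proof.
  intros [F [F0 F1]]. exists (F 1%nat). split.
  - intros n. exists (fun k => F (S k)). split; auto.
  - intros x Hx. apply (deriv_within_ext a b (F O)); auto.
Qed.

(** * Group-like paths and linear equations *)

Lemma grouplike_unit d T K (Z : gpath) :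
  (exists s0 t0 w0, in_I T s0 /\ in_I T t0 /\ valid d w0 /\ (length w0 <= K)%nat /\ Z s0 t0 w0 <> 0) ->
  (forall s t v w, in_I T s -> in_I T t -> valid d v -> valid d w -> (length v + length w <= K)%nat ->
     pair_list (Z s t) (shuffle v w) = Z s t v * Z s t w) ->
  (forall s u t w, in_I T s -> in_I T u -> in_I T t -> valid d w -> (length w <= K)%nat ->
     conc (Z s u) (Z u t) w = Z s t w) ->
  forall s t, in_I T s -> in_I T t -> Z s t [] = 1.
Proof.
  intros [s0 [t0 [w0 [Hs0 [Ht0 [Vw0 [Lw0 Hne]]]]]]] Hsh Hch s t Hs Ht.
  assert (Vnil : valid d []) by constructor.
  assert (Idem : forall s t, in_I T s -> in_I T t -> Z s t [] * Z s t [] = Z s t []).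
  { intros s' t' Hs' Ht'. rewrite <- Hsh by (auto; simpl; lia). rewrite shuffle_nil_l. simpl. ring. }
  assert (H1 : Z s0 t0 [] = 1).
  { assert (E := Hsh s0 t0 w0 [] Hs0 Ht0 Vw0 Vnil). rewrite shuffle_nil_r, Nat.add_0_r in E.
    specialize (E Lw0). simpl in E. apply (Rmult_eq_reg_l (Z s0 t0 w0)); auto. lra. }
  assert (Hch0 : forall s u t, in_I T s -> in_I T u -> in_I T t -> Z s u [] * Z u t [] = Z s t []).
  { intros. rewrite <- conc_nil. apply Hch; auto; simpl; lia. }
  assert (H2 : forall u, in_I T u -> Z u t0 [] = 1).
  { intros u Hu. assert (E := Hch0 s0 u t0 Hs0 Hu Ht0). rewrite H1 in E.
    assert (E2 := Idem u t0 Hu Ht0).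
    destruct (Req_dec (Z u t0 []) 0) as [Z0|Z0]; [rewrite Z0 in E; lra|].
    apply (Rmult_eq_reg_l (Z u t0 [])); auto. lra. }
  assert (E := Hch0 s t t0 Hs Ht Ht0). rewrite !H2 in E by auto. lra.
Qed.

Lemma chen_diag d T K (Z : gpath) :
  (forall s t, in_I T s -> in_I T t -> Z s t [] = 1) ->
  (forall s u t w, in_I T s -> in_I T u -> in_I T t -> valid d w -> (length w <= K)%nat ->
     conc (Z s u) (Z u t) w = Z s t w) ->
  forall s w, in_I T s -> valid d w -> (length w <= K)%nat -> Z s s w = e_nil w.
Proof.
  intros Hu Hch s w Hs. remember (length w) as n eqn:En. revert w En.
  induction n as [n IH] using lt_wf_ind. intros w En Vw Lw. rewrite En in Lw.
  destruct w as [|c w']; [simpl; apply Hu; auto|].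
  simpl. assert (E := Hch s s s (c :: w') Hs Hs Hs Vw Lw).
  rewrite conc_cons, Hu, conc_splits in E by auto.
  rewrite (lsum_ext _ (fun pq : word * word => match snd pq with [] => Z s s (c :: fst pq) | _ => 0 end)) in E.
  - rewrite (lsum_splits_last (fun p => Z s s (c :: p))) in E. lra.
  - intros [p q] Hin. cbn [fst snd]. apply splits_app in Hin. subst w'. destruct q as [|b q].
    + rewrite Hu by auto. ring.
    + replace (Z s s (c :: p)) with (e_nil (c :: p)); [simpl; ring|].
      inversion Vw as [|? ? Vc Vpq]; subst. apply Forall_app in Vpq.
      symmetry. apply (IH (length (c :: p))); simpl in *; rewrite ?length_app in *; simpl in *;
        try lia; constructor; tauto.
Qed.

Lemma sgrm_unit d T Z : sgrm d T Z -> forall s t, in_I T s -> in_I T t -> Z s t [] = 1.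
Proof.
  intros [[s0 [t0 [w0 [H1 [H2 [H3 H4]]]]]] [Hsh [Hch _]]].
  apply (grouplike_unit d T (length w0) Z).
  - exists s0, t0, w0. repeat (split; [assumption|]). split; [apply le_n|assumption].
  - intros; apply Hsh; auto.
  - intros; apply Hch; auto.
Qed.

Lemma sgrm_diag d T Z : sgrm d T Z -> forall s w, in_I T s -> valid d w -> Z s s w = e_nil w.
Proof.
  intros HZ s w Hs Vw. apply (chen_diag d T (length w) Z); auto.
  - apply (sgrm_unit d T Z HZ).
  - intros; apply HZ; auto.
Qed.

Lemma N_sgrm_unit d T N Y : N_sgrm d T N Y -> forall s t, in_I T s -> in_I T t -> Y s t [] = 1.
Proof. intros [H1 [H2 [H3 _]]]. apply (grouplike_unit d T N Y); auto. Qed.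

Lemma N_sgrm_diag d T N Y : N_sgrm d T N Y ->
  forall s w, in_I T s -> valid d w -> (length w <= N)%nat -> Y s s w = e_nil w.
Proof. intros HY. apply (chen_diag d T N Y); [apply (N_sgrm_unit d T N Y HY)|apply HY]. Qed.

Lemma deriv_within_conc_r a b (A : series) (B : R -> series) (l : series) y w d :
  valid d w ->
  (forall q, valid d q -> (length q <= length w)%nat -> has_deriv_within a b (fun r => B r q) y (l q)) ->
  has_deriv_within a b (fun r => conc A (B r) w) y (conc A l w).
Proof.
  intros Vw H. rewrite conc_splits.
  apply (deriv_within_ext_loc a b (fun r => lsum (fun pq : word * word => A (fst pq) * B r (snd pq)) (splits w))
           _ y _ (mkposreal 1 Rlt_0_1)).
  - intros; rewrite conc_splits; auto.
  - rewrite conc_splits; auto.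
  - apply (deriv_within_lsum a b (fun pq r => A (fst pq) * B r (snd pq))). intros [p q] Hin.
    destruct (splits_valid d w p q Hin Vw) as [_ [Vq Lq]].
    apply deriv_within_scal, H; auto. cbn. lia.
Qed.

Lemma chen_deriv_within d T (Z : gpath) s y w (l : series) :
  in_I T y -> valid d w ->
  (forall r, in_I T r -> conc (Z s y) (Z y r) w = Z s r w) ->
  (forall q, valid d q -> (length q <= length w)%nat -> has_deriv_within 0 T (fun r => Z y r q) y (l q)) ->
  has_deriv_within 0 T (fun r => Z s r w) y (conc (Z s y) l w).
Proof.
  intros Hy Vw Hc Hd. apply (deriv_within_ext 0 T (fun r => conc (Z s y) (Z y r) w)); auto.
  apply (deriv_within_conc_r 0 T (Z s y) (fun r => Z y r) l y w d); auto.
Qed.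

(* Since [L y] vanishes on the empty word, the equation for the coefficient of
   [w] only involves strictly shorter coefficients of [Z]; by induction on [|w|]
   the difference [Z1 - Z2] has zero derivative. *)
Lemma conc_ode_unique d T K (Z1 Z2 L : R -> series) a b s :
  0 <= a -> b <= T -> a <= s <= b ->
  (forall y w, a <= y <= b -> valid d w -> (length w <= K)%nat ->
     exists m, has_deriv_within 0 T (fun r => Z1 r w) y m) ->
  (forall y w, a <= y <= b -> valid d w -> (length w <= K)%nat ->
     exists m, has_deriv_within 0 T (fun r => Z2 r w) y m) ->
  (forall y w, a < y < b -> valid d w -> (length w <= K)%nat ->
     has_deriv_within 0 T (fun r => Z1 r w) y (conc (Z1 y) (L y) w)) ->
  (forall y w, a < y < b -> valid d w -> (length w <= K)%nat ->
     has_deriv_within 0 T (fun r => Z2 r w) y (conc (Z2 y) (L y) w)) ->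
  (forall y, a < y < b -> L y [] = 0) ->
  (forall w, valid d w -> (length w <= K)%nat -> Z1 s w = Z2 s w) ->
  forall y w, a <= y <= b -> valid d w -> (length w <= K)%nat -> Z1 y w = Z2 y w.
Proof.
  intros Ha Hb Hs E1 E2 D1 D2 HL0 Hinit y w Hy Vw Lw.
  remember (length w) as n eqn:En. revert y w Hy En Vw Lw.
  induction n as [n IH] using lt_wf_ind. intros y w Hy En Vw Lw.
  assert (Hc : forall r, a <= r <= b -> Z1 r w - Z2 r w = Z1 a w - Z2 a w).
  { apply (deriv_within_zero_const 0 T (fun r => Z1 r w - Z2 r w) a b); try lra.
    - intros r Hr. destruct (E1 r w Hr Vw ltac:(lia)) as [m1 H1].
      destruct (E2 r w Hr Vw ltac:(lia)) as [m2 H2].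
      exists (m1 - m2). apply deriv_within_minus; auto.
    - intros r Hr.
      assert (HD := deriv_within_minus _ _ _ _ _ _ _ (D1 r w Hr Vw ltac:(lia)) (D2 r w Hr Vw ltac:(lia))).
      replace (conc (Z1 r) (L r) w - conc (Z2 r) (L r) w) with 0 in HD; auto.
      rewrite !conc_splits, <- lsum_minus. symmetry. apply lsum_zero. intros [p q] Hin.
      destruct (splits_valid d w p q Hin Vw) as [Vp [Vq Lpq]]. cbn [fst snd].
      destruct q as [|c q]; [rewrite HL0 by auto; ring|].
      rewrite (IH (length p)); [ring| |lra|auto|auto|]; simpl in Lpq; lia. }
  assert (E := Hc y Hy). assert (E0 := Hc s Hs). rewrite Hinit in E0 by (auto; lia). lra.
Qed.

(** * Solving d/dt X_{s,t} = X_{s,t} (x) L_t by iterated integrals *)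

Section ConcODE.

Variable L : R -> series.

(* The coefficient of a nonempty word [w] is the integral of the part of
   [X (x) L] that only involves strictly shorter coefficients of [X];
   [n] is fuel, sufficient as soon as [|w| <= n]. *)
Fixpoint ode_sol_fuel (n : nat) (s t : R) (w : word) : R :=
  match n with
  | O => e_nil w
  | S n' =>
      match w with
      | [] => 1
      | _ :: _ => RInt (fun u => lsum (fun k => ode_sol_fuel n' s u (firstn k w) * L u (skipn k w))
                                     (seq 0 (length w))) s t
      end
  end.

Definition ode_sol (s t : R) (w : word) : R := ode_sol_fuel (length w) s t w.

Definition ode_rhs (s t : R) (w : word) : R :=
  lsum (fun k => ode_sol s t (firstn k w) * L t (skipn k w)) (seq 0 (length w)).

Lemma ode_sol_fuel_cons n s t c w : ode_sol_fuel (S n) s t (c :: w) =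
  RInt (fun u => lsum (fun k => ode_sol_fuel n s u (firstn k (c :: w)) * L u (skipn k (c :: w)))
                      (seq 0 (length (c :: w)))) s t.
Proof. reflexivity. Qed.

Lemma ode_sol_fuel_S n : forall w s t, (length w <= n)%nat ->
  ode_sol_fuel (S n) s t w = ode_sol_fuel n s t w.
Proof.
  induction n as [|n IH]; intros w s t Hw.
  - destruct w; [reflexivity|simpl in Hw; lia].
  - destruct w as [|c w']; [reflexivity|].
    rewrite !ode_sol_fuel_cons. apply RInt_ext. intros u _. apply lsum_ext. intros k Hk. apply in_seq in Hk.
    rewrite IH; auto. rewrite length_firstn. simpl in *. lia.
Qed.

Lemma ode_sol_fuel_enough n w s t : (length w <= n)%nat -> ode_sol_fuel n s t w = ode_sol s t w.
Proof.
  intros H. unfold ode_sol. induction n as [|n IH].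
  - replace (length w) with O by lia. reflexivity.
  - destruct (Nat.eq_dec (length w) (S n)) as [->|Hne]; [reflexivity|].
    rewrite ode_sol_fuel_S by lia. apply IH. lia.
Qed.

Lemma ode_sol_cons s t c w : ode_sol s t (c :: w) = RInt (fun u => ode_rhs s u (c :: w)) s t.
Proof.
  unfold ode_sol at 1. cbn [length]. rewrite ode_sol_fuel_cons. apply RInt_ext. intros u _. unfold ode_rhs.
  apply lsum_ext. intros k Hk. apply in_seq in Hk.
  rewrite ode_sol_fuel_enough; auto. rewrite length_firstn. simpl in *. lia.
Qed.

Lemma ode_sol_diag s w : ode_sol s s w = e_nil w.
Proof. destruct w as [|c w']; [reflexivity|]. rewrite ode_sol_cons, RInt_point. reflexivity. Qed.

Hypothesis L_continuous : forall q z, continuity_pt (fun u => L u q) z.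

Lemma ode_sol_deriv w s t : is_derive (fun t => ode_sol s t w) t (ode_rhs s t w).
Proof.
  remember (length w) as n eqn:En. revert w t En.
  induction n as [n IH] using lt_wf_ind. intros w t En.
  destruct w as [|c w'].
  - apply (is_derive_ext (fun _ => 1)); [reflexivity|]. apply (@is_derive_const R_AbsRing).
  - apply (is_derive_ext (fun t => RInt (fun u => ode_rhs s u (c :: w')) s t));
      [intros; symmetry; apply ode_sol_cons|].
    apply is_derive_RInt_continuous. intros z. apply continuity_pt_lsum. intros k Hk. apply in_seq in Hk.
    apply continuity_pt_mult; [|apply L_continuous].
    apply continuity_pt_filterlim, (@ex_derive_continuous R_AbsRing).
    eexists. apply (IH k); [simpl in *; lia|]. rewrite length_firstn. simpl in *. lia.
Qed.

Lemma ode_rhs_conc s t w : L t [] = 0 -> ode_rhs s t w = conc (ode_sol s t) (L t) w.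
Proof.
  intros H0. unfold ode_rhs, conc. rewrite sum_f_R0_lsum, seq_S, lsum_app. simpl.
  rewrite skipn_all, H0, Rmult_0_r, !Rplus_0_r. reflexivity.
Qed.

End ConcODE.

(** * The minimal extension *)

Definition validb (d : nat) (w : word) : bool :=
  forallb (fun i => andb (Nat.leb 1 i) (Nat.leb i d)) w.

Lemma validb_spec d w : validb d w = true <-> valid d w.
Proof.
  unfold validb, valid. rewrite forallb_forall, Forall_forall.
  split; intros H x Hx; specialize (H x Hx).
  - apply Bool.andb_true_iff in H. destruct H as [H1 H2]. apply Nat.leb_le in H1, H2. lia.
  - apply Bool.andb_true_iff. split; apply Nat.leb_le; lia.
Qed.

Definition deriv_pick (a b : R) (f : R -> R) (x : R) : R :=
  epsilon (inhabits 0) (fun l => has_deriv_within a b f x l).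

Lemma deriv_pick_spec a b f x l :
  has_deriv_within a b f x l -> has_deriv_within a b f x (deriv_pick a b f x).
Proof. intros H. unfold deriv_pick. apply epsilon_spec. exists l; auto. Qed.

Lemma minimal_deriv_exists d T N Z : sgrm d T Z -> minimal d T N Z ->
  forall s y w, in_I T s -> in_I T y -> valid d w -> exists m, has_deriv_within 0 T (fun r => Z s r w) y m.
Proof.
  intros HZ Hm s y w Hs Hy Vw. destruct (Hm y Hy) as [l' [_ Hl']].
  exists (conc (Z s y) l' w). apply (chen_deriv_within d T Z s y w l' Hy Vw).
  - intros r Hr. apply HZ; auto.
  - intros q Vq _. apply Hl'; auto.
Qed.

Section MinimalExtension.

Variables (d : nat) (T : R) (N : nat) (Y : gpath).
Hypothesis T_pos : 0 < T.
Hypothesis Y_N_sgrm : N_sgrm d T N Y.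

Definition diag_deriv (u : R) : series := fun w =>
  if andb (validb d w) (Nat.leb (length w) N) then deriv_pick 0 T (fun t => Y u t w) u else 0.

Lemma diag_deriv_invalid u w : ~ valid d w -> diag_deriv u w = 0.
Proof.
  intros H. unfold diag_deriv. destruct (validb d w) eqn:E; [apply validb_spec in E; tauto|reflexivity].
Qed.

Lemma diag_deriv_long u w : (N < length w)%nat -> diag_deriv u w = 0.
Proof.
  intros H. unfold diag_deriv. replace (Nat.leb (length w) N) with false by (symmetry; apply Nat.leb_gt; lia).
  rewrite Bool.andb_false_r. reflexivity.
Qed.

Lemma diag_deriv_spec u w : in_I T u -> valid d w -> (length w <= N)%nat ->
  has_deriv_within 0 T (fun t => Y u t w) u (diag_deriv u w).
Proof.
  intros Hu Vw Lw. unfold diag_deriv.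
  replace (validb d w) with true by (symmetry; apply validb_spec; auto).
  replace (Nat.leb (length w) N) with true by (symmetry; apply Nat.leb_le; auto).
  destruct Y_N_sgrm as [_ [_ [_ Hsm]]].
  destruct (smooth_on_deriv 0 T _ (Hsm u w Hu Vw Lw)) as [g [_ Hg]].
  exact (deriv_pick_spec _ _ _ _ _ (Hg u Hu)).
Qed.

Lemma diag_deriv_nil u : in_I T u -> diag_deriv u [] = 0.
Proof.
  intros Hu. apply (deriv_within_unique 0 T (fun t => Y u t []) u); auto.
  - apply diag_deriv_spec; auto; [constructor|simpl; lia].
  - apply (deriv_within_ext 0 T (fun _ => 1)); auto; [|apply deriv_within_const].
    intros; symmetry; apply (N_sgrm_unit d T N Y Y_N_sgrm); auto.
Qed.

Lemma N_sgrm_deriv s t w : in_I T s -> in_I T t -> valid d w -> (length w <= N)%nat ->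
  has_deriv_within 0 T (fun r => Y s r w) t (conc (Y s t) (diag_deriv t) w).
Proof.
  intros Hs Ht Vw Lw. apply (chen_deriv_within d T Y s t w); auto.
  - intros r Hr. apply Y_N_sgrm; auto.
  - intros q Vq Lq. apply diag_deriv_spec; auto. lia.
Qed.

(* Differentiate the shuffle identity of [Y] at the diagonal, where [Y] is [1]. *)
Lemma diag_deriv_primitive u n : in_I T u -> primitive d n (diag_deriv u).
Proof.
  intros Hu a b Va Vb Na Nb Lab.
  destruct (Nat.le_gt_cases (length a + length b) N) as [LN|LN];
    [|apply pair_shuffle_zero_length; intros; apply diag_deriv_long; lia].
  rewrite pair_shuffle_lsum.
  apply (deriv_within_unique 0 T (fun t => lsum (Y u t) (shuffle a b)) u); auto.
  - apply (deriv_within_lsum 0 T (fun z t => Y u t z)). intros z Hz.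
    apply diag_deriv_spec; auto.
    + apply (shuffle_Forall _ a b z Va Vb Hz).
    + rewrite (shuffle_length a b z Hz). auto.
  - apply (deriv_within_ext 0 T (fun t => Y u t a * Y u t b)); auto.
    + intros; rewrite <- pair_list_lsum. symmetry. apply Y_N_sgrm; auto.
    + assert (HD := deriv_within_mult 0 T _ _ u _ _ (diag_deriv_spec u a Hu Va ltac:(lia))
                                                    (diag_deriv_spec u b Hu Vb ltac:(lia))).
      cbv beta in HD. rewrite !(N_sgrm_diag d T N Y Y_N_sgrm) in HD by (auto; lia).
      destruct a; [congruence|]. destruct b; [congruence|]. simpl in HD.
      rewrite Rmult_0_r, Rmult_0_l, Rplus_0_r in HD. exact HD.
Qed.

(* [Y_{0,u} (x) L_u = d/du Y_{0,u}] is smooth in [u], and its coefficient of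
   [w] is [L_u w] plus products involving [L_u] on shorter words only. *)
Lemma diag_deriv_smooth w : Cinf_on 0 T (fun u => diag_deriv u w).
Proof.
  destruct (classic (valid d w /\ (length w <= N)%nat)) as [[Vw Lw]|Hn].
  2:{ apply (Cinf_on_ext 0 T (fun _ => 0)); [|apply Cinf_on_const]. intros x _. symmetry.
      destruct (classic (valid d w)) as [V|V]; [|apply diag_deriv_invalid; auto].
      apply diag_deriv_long. destruct (Nat.le_gt_cases (length w) N); [tauto|lia]. }
  remember (length w) as n eqn:En. revert w En Vw Lw.
  induction n as [n IH] using lt_wf_ind. intros w En Vw Lw.
  destruct Y_N_sgrm as [_ [_ [_ Hsm]]].
  assert (H0T : in_I T 0) by (unfold in_I; lra).
  destruct (smooth_on_deriv 0 T _ (Hsm 0 w H0T Vw ltac:(lia))) as [G [SG DG]].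
  destruct w as [|c w'].
  { apply (Cinf_on_ext 0 T (fun _ => 0)); [|apply Cinf_on_const]. intros x Hx. symmetry. apply diag_deriv_nil; auto. }
  apply (Cinf_on_ext 0 T (fun u => G u - lsum (fun pq : word * word => Y 0 u (c :: fst pq) * diag_deriv u (snd pq)) (splits w'))).
  - intros u Hu. assert (E : G u = conc (Y 0 u) (diag_deriv u) (c :: w')).
    { apply (deriv_within_unique 0 T (fun t => Y 0 t (c :: w')) u); auto. apply N_sgrm_deriv; auto. lia. }
    rewrite E, conc_cons, (N_sgrm_unit d T N Y Y_N_sgrm), conc_splits by auto. ring.
  - apply Cinf_on_minus; auto. apply (Cinf_on_lsum 0 T (fun pq u => Y 0 u (c :: fst pq) * diag_deriv u (snd pq))).
    intros [p q] Hin. cbn [fst snd]. inversion Vw as [|? ? Vc Vw']; subst.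
    destruct (splits_valid d w' p q Hin Vw') as [Vp [Vq Lpq]].
    apply Cinf_on_mult.
    + apply smooth_on_Cinf_on, Hsm; [auto|constructor; auto|simpl in *; lia].
    + apply (IH (length q)); auto; simpl in *; lia.
Qed.

(* Extended constantly outside [0, T], so that it is continuous on all of R. *)
Definition diag_deriv_clamped (u : R) : series := diag_deriv (clamp 0 T u).

Lemma diag_deriv_clamped_continuous q z : continuity_pt (fun u => diag_deriv_clamped u q) z.
Proof.
  unfold diag_deriv_clamped. apply (continuity_pt_clamp 0 T (fun u => diag_deriv u q) 0 T); try lra.
  intros y Hy. destruct (Cinf_on_deriv 0 T _ (diag_deriv_smooth q)) as [g Hg].
  exact (deriv_within_continuous _ _ _ _ _ (Hg y Hy)).
Qed.

Lemma diag_deriv_clamped_in u w : in_I T u -> diag_deriv_clamped u w = diag_deriv u w.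
Proof. intros Hu. unfold diag_deriv_clamped. rewrite clamp_id; auto. Qed.

Definition min_ext : gpath := ode_sol diag_deriv_clamped.

Lemma min_ext_diag s w : min_ext s s w = e_nil w.
Proof. apply ode_sol_diag. Qed.

Lemma min_ext_ode s t w : in_I T t ->
  has_deriv_within 0 T (fun r => min_ext s r w) t (conc (min_ext s t) (diag_deriv t) w).
Proof.
  intros Ht. apply is_derive_deriv_within.
  assert (HD := ode_sol_deriv _ diag_deriv_clamped_continuous w s t).
  rewrite ode_rhs_conc in HD by (rewrite diag_deriv_clamped_in by auto; apply diag_deriv_nil; auto).
  rewrite (conc_ext_split _ (min_ext s t) _ (diag_deriv t)) in HD; [exact HD|].
  intros; split; auto. apply diag_deriv_clamped_in; auto.
Qed.

Lemma min_ext_chen s u t w : in_I T s -> in_I T u -> in_I T t -> valid d w ->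
  conc (min_ext s u) (min_ext u t) w = min_ext s t w.
Proof.
  intros Hs Hu Ht Vw.
  apply (conc_ode_unique d T (length w) (fun r => conc (min_ext s u) (min_ext u r)) (fun r => min_ext s r)
           diag_deriv 0 T u); auto; try lra.
  - intros y q Hy Vq Lq. exists (conc (min_ext s u) (conc (min_ext u y) (diag_deriv y)) q).
    apply (deriv_within_conc_r 0 T (min_ext s u) (fun r => min_ext u r) _ y q d); auto.
    intros; apply min_ext_ode; auto.
  - intros y q Hy Vq Lq. eexists. apply min_ext_ode; auto.
  - intros y q Hy Vq Lq. rewrite conc_assoc.
    apply (deriv_within_conc_r 0 T (min_ext s u) (fun r => min_ext u r) _ y q d); auto.
    intros; apply min_ext_ode; unfold in_I; lra.
  - intros y q Hy Vq Lq. apply min_ext_ode; unfold in_I; lra.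
  - intros y Hy. apply diag_deriv_nil. unfold in_I; lra.
  - intros q Vq Lq. rewrite (conc_ext_split _ (min_ext s u) _ e_nil); [apply conc_e_nil_r|].
    intros; split; auto. apply min_ext_diag.
Qed.

Lemma min_ext_extends : extends d T N min_ext Y.
Proof.
  intros s t w Hs Ht Vw Lw.
  apply (conc_ode_unique d T N (fun r => min_ext s r) (fun r => Y s r) diag_deriv 0 T s); auto; try lra.
  - intros y q Hy Vq Lq. eexists. apply min_ext_ode; auto.
  - intros y q Hy Vq Lq. eexists. apply N_sgrm_deriv; auto.
  - intros y q Hy Vq Lq. apply min_ext_ode. unfold in_I; lra.
  - intros y q Hy Vq Lq. apply N_sgrm_deriv; auto. unfold in_I; lra.
  - intros y Hy. apply diag_deriv_nil. unfold in_I; lra.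
  - intros q Vq Lq. rewrite min_ext_diag, (N_sgrm_diag d T N Y Y_N_sgrm); auto.
Qed.

Lemma min_ext_shuffle s t a b : in_I T s -> in_I T t -> valid d a -> valid d b ->
  pair_shuffle (min_ext s t) a b = min_ext s t a * min_ext s t b.
Proof.
  intros Hs Ht. remember (length a + length b)%nat as n eqn:En. revert a b t Ht En.
  induction n as [n IH] using lt_wf_ind. intros a b t Ht En Va Vb.
  assert (HPL : forall y, in_I T y ->
            has_deriv_within 0 T (fun r => pair_shuffle (min_ext s r) a b) y (coproduct_sum (min_ext s y) (diag_deriv y) a b)).
  { intros y Hy. rewrite <- pair_shuffle_conc, pair_shuffle_lsum.
    apply (deriv_within_ext 0 T (fun r => lsum (min_ext s r) (shuffle a b))); auto.
    apply (deriv_within_lsum 0 T (fun z r => min_ext s r z)). intros; apply min_ext_ode; auto. }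
  assert (Hz : forall r, 0 <= r <= T ->
            pair_shuffle (min_ext s r) a b - min_ext s r a * min_ext s r b = pair_shuffle (min_ext s 0) a b - min_ext s 0 a * min_ext s 0 b).
  { apply (deriv_within_zero_const 0 T (fun r => pair_shuffle (min_ext s r) a b - min_ext s r a * min_ext s r b) 0 T);
      try lra.
    - intros y Hy. eexists. apply deriv_within_minus; [apply HPL; auto|].
      apply deriv_within_mult; apply min_ext_ode; auto.
    - intros y Hy. assert (Hy' : in_I T y) by (unfold in_I; lra).
      assert (HD := deriv_within_minus _ _ _ _ _ _ _ (HPL y Hy')
                      (deriv_within_mult _ _ _ _ _ _ _ (min_ext_ode s y a Hy') (min_ext_ode s y b Hy'))).
      cbv beta in HD. rewrite (coproduct_sum_character_primitive d) in HD; auto.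
      + match type of HD with has_deriv_within _ _ _ _ ?v => replace v with 0 in HD by ring end. exact HD.
      + apply diag_deriv_primitive; auto.
      + apply diag_deriv_nil; auto.
      + intros a1 b1 Va1 Vb1 L1. apply (IH (length a1 + length b1)%nat); auto; lia. }
  assert (H0 : pair_shuffle (min_ext s s) a b - min_ext s s a * min_ext s s b = 0).
  { rewrite (pair_shuffle_ext _ e_nil) by apply min_ext_diag. rewrite !min_ext_diag, pair_shuffle_e_nil. ring. }
  assert (E1 := Hz t Ht). assert (E2 := Hz s Hs). lra.
Qed.

Lemma min_ext_smooth s w : Cinf_on 0 T (fun t => min_ext s t w).
Proof.
  intros n. revert w. induction n as [|n IH]; intros w.
  - exists (fun _ t => min_ext s t w). split; auto. intros; lia.
  - apply (Ck_on_S 0 T n _ (fun t => conc (min_ext s t) (diag_deriv t) w)).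
    + intros x Hx. apply min_ext_ode; auto.
    + apply (Ck_on_ext 0 T n (fun t => lsum (fun pq : word * word => min_ext s t (fst pq) * diag_deriv t (snd pq)) (splits w))).
      { intros; rewrite conc_splits; auto. }
      apply (Ck_on_lsum 0 T n (fun pq t => min_ext s t (fst pq) * diag_deriv t (snd pq))).
      intros [p q] _. apply Ck_on_mult; [apply IH|apply diag_deriv_smooth].
Qed.

Lemma min_ext_sgrm : sgrm d T min_ext.
Proof.
  assert (I0 : in_I T 0) by (unfold in_I; lra).
  split; [|split; [|split]].
  - exists 0, 0, []. repeat (split; [auto|]); [constructor|]. rewrite min_ext_diag. simpl. lra.
  - intros s t v w Hs Ht Vv Vw. rewrite pair_list_lsum, <- pair_shuffle_lsum. apply min_ext_shuffle; auto.
  - intros s u t w Hs Hu Ht Vw. apply min_ext_chen; auto.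
  - intros s w Hs Vw. apply Cinf_on_smooth_on; auto. apply min_ext_smooth.
Qed.

Lemma min_ext_diag_deriv s w : in_I T s ->
  has_deriv_within 0 T (fun t => min_ext s t w) s (diag_deriv s w).
Proof.
  intros Hs. assert (HD := min_ext_ode s s w Hs).
  rewrite (conc_ext_split _ e_nil _ (diag_deriv s)), conc_e_nil_l in HD; [exact HD|].
  intros; split; auto. apply min_ext_diag.
Qed.

Lemma min_ext_minimal : minimal d T N min_ext.
Proof.
  intros s Hs. exists (diag_deriv s). split.
  - apply friedrichs_criterion.
    + apply diag_deriv_nil; auto.
    + intros; apply diag_deriv_invalid; auto.
    + intros; apply diag_deriv_long; auto.
    + apply diag_deriv_primitive; auto.
  - intros w Vw. apply min_ext_diag_deriv; auto.
Qed.

(* A Lie polynomial of [L^N] vanishes above degree [N], and below it is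
   determined by the derivative of [Y] at the diagonal. *)
Lemma minimal_deriv_is_diag_deriv (Z : gpath) y l a b : 0 <= a -> a < y < b -> b <= T ->
  lie_trunc d N l -> (forall w, valid d w -> has_deriv_within 0 T (fun r => Z y r w) y (l w)) ->
  (forall w r, valid d w -> (length w <= N)%nat -> a <= r <= b -> Z y r w = Y y r w) ->
  forall w, valid d w -> l w = diag_deriv y w.
Proof.
  intros Ha Hy Hb Hl HD Hag w Vw.
  destruct (Nat.le_gt_cases (length w) N) as [Lw|Lw].
  - assert (Hm : 0 < Rmin (y - a) (b - y)) by (apply Rmin_pos; lra).
    assert (H1 := Rmin_l (y - a) (b - y)). assert (H2 := Rmin_r (y - a) (b - y)).
    apply (deriv_within_unique 0 T (fun r => Y y r w) y); try (unfold in_I; lra).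
    + apply (deriv_within_ext_loc 0 T (fun r => Z y r w) _ y _ (mkposreal _ Hm)); [| |apply HD; auto].
      * intros r Hr Hrd. apply Rabs_def2 in Hrd. simpl in Hrd. apply Hag; auto; lra.
      * apply Hag; auto; lra.
    + apply diag_deriv_spec; auto. unfold in_I; lra.
  - rewrite diag_deriv_long by auto. destruct Hl as [z [_ Hz]]. rewrite Hz.
    replace (Nat.leb (length w) N) with false by (symmetry; apply Nat.leb_gt; lia). reflexivity.
Qed.

Lemma minimal_ode (Z : gpath) y a b : sgrm d T Z -> minimal d T N Z -> 0 <= a -> a < y < b -> b <= T ->
  (forall w r, valid d w -> (length w <= N)%nat -> a <= r <= b -> Z y r w = Y y r w) ->
  forall s w, in_I T s -> valid d w ->
  has_deriv_within 0 T (fun r => Z s r w) y (conc (Z s y) (diag_deriv y) w).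
Proof.
  intros HZ Hm Ha Hy Hb Hag s w Hs Vw.
  assert (Hy' : in_I T y) by (unfold in_I; lra).
  destruct (Hm y Hy') as [l [Hl Hl']].
  apply (chen_deriv_within d T Z s y w _ Hy' Vw).
  - intros r Hr. apply HZ; auto.
  - intros q Vq _. rewrite <- (minimal_deriv_is_diag_deriv Z y l a b); auto.
Qed.

(* Both [Z] and [Z'] solve [d/dt Z_{s,t} = Z_{s,t} (x) L_t] on [a, b], with [L]
   the diagonal derivative of [Y]. *)
Lemma minimal_extensions_agree (Y' Z Z' : gpath) a b : 0 <= a -> a <= b -> b <= T ->
  (forall u v w, a <= u <= b -> a <= v <= b -> valid d w -> (length w <= N)%nat -> Y u v w = Y' u v w) ->
  sgrm d T Z -> extends d T N Z Y -> minimal d T N Z ->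
  sgrm d T Z' -> extends d T N Z' Y' -> minimal d T N Z' ->
  forall s t w, a <= s <= b -> a <= t <= b -> valid d w -> Z s t w = Z' s t w.
Proof.
  intros Ha Hab Hb Hag HZ HextZ HmZ HZ' HextZ' HmZ' s t w Hs Ht Vw.
  assert (Hs' : in_I T s) by (unfold in_I; lra).
  apply (conc_ode_unique d T (length w) (fun r => Z s r) (fun r => Z' s r) diag_deriv a b s); auto; try lra.
  - intros y q Hy Vq Lq. apply (minimal_deriv_exists d T N Z); auto. unfold in_I; lra.
  - intros y q Hy Vq Lq. apply (minimal_deriv_exists d T N Z'); auto. unfold in_I; lra.
  - intros y q Hy Vq Lq. apply (minimal_ode Z y a b); auto.
    intros w' r Vw' Lw' Hr. apply HextZ; auto; unfold in_I; lra.
  - intros y q Hy Vq Lq. apply (minimal_ode Z' y a b); auto.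
    intros w' r Vw' Lw' Hr. rewrite HextZ' by (auto; unfold in_I; lra). symmetry. apply Hag; auto; lra.
  - intros y Hy. apply diag_deriv_nil. unfold in_I; lra.
  - intros q Vq Lq. rewrite (sgrm_diag d T Z HZ), (sgrm_diag d T Z' HZ'); auto.
Qed.

End MinimalExtension.

Theorem theorem2p8 (d : nat) (T : R) (N : nat) (Y : gpath) :
  (1 <= d)%nat -> 0 < T -> N_sgrm d T N Y ->
  (exists X : gpath,
     sgrm d T X /\ extends d T N X Y /\ minimal d T N X /\
     (* uniqueness *)
     (forall X' : gpath, sgrm d T X' -> extends d T N X' Y -> minimal d T N X' ->
        forall s t w, in_I T s -> in_I T t -> valid d w -> X' s t w = X s t w) /\
     (* diagonal derivative of X equals that of Y (viewed in T((R^d))) *)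
     (forall s w, in_I T s -> valid d w ->
        ((length w <= N)%nat -> forall l,
           has_deriv_within 0 T (fun t => Y s t w) s l ->
           has_deriv_within 0 T (fun t => X s t w) s l) /\
        ((N < length w)%nat -> has_deriv_within 0 T (fun t => X s t w) s 0))) /\
  (* locality: X_{s,t} depends only on Y restricted to [s,t]^2 *)
  (forall (Y' X X' : gpath) (s t : R),
     N_sgrm d T N Y' -> 0 <= s -> s <= t -> t <= T ->
     (forall u v w, s <= u <= t -> s <= v <= t -> valid d w ->
        (length w <= N)%nat -> Y u v w = Y' u v w) ->
     sgrm d T X -> extends d T N X Y -> minimal d T N X ->
     sgrm d T X' -> extends d T N X' Y' -> minimal d T N X' ->
     forall w, valid d w -> X s t w = X' s t w).
Proof.
  intros _ HT HY.
  assert (HX := min_ext_sgrm d T N Y HT HY).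
  assert (Hext := min_ext_extends d T N Y HT HY).
  assert (Hmin := min_ext_minimal d T N Y HT HY).
  split.
  - exists (min_ext d T N Y). split; [exact HX|split; [exact Hext|split; [exact Hmin|split]]].
    + intros X' HX' Hext' Hmin' s t w Hs Ht Vw. symmetry.
      refine (minimal_extensions_agree d T N Y HT HY Y _ X' 0 T _ _ _ _ HX Hext Hmin HX' Hext' Hmin' s t w Hs Ht Vw);
        [lra|lra|lra|intros; reflexivity].
    + intros s w Hs Vw. split.
      * intros Lw l Hl. apply (deriv_within_ext 0 T (fun t => Y s t w)); [exact Hs| |exact Hl].
        intros t Ht. symmetry. apply Hext; auto.
      * intros Lw. rewrite <- (diag_deriv_long d T N Y s w Lw) at 2. apply min_ext_diag_deriv; auto.
  - intros Y' X X' s t HY' Hs Hst Ht Hag HX1 Hext1 Hmin1 HX1' Hext1' Hmin1' w Vw.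
    refine (minimal_extensions_agree d T N Y HT HY Y' X X' s t Hs Hst Ht Hag
              HX1 Hext1 Hmin1 HX1' Hext1' Hmin1' s t w _ _ Vw); lra.
Qed.
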